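(* Let $\mathcal K$ be a 2-category which admits Eilenberg–Moore constructions for monads and in which idempotent 2-cells split. For every 1-cell $(V,\psi):(t,\mu,\eta)\to(t',\mu',\eta')$ of $\mathrm{EM}^w(\mathcal K)$ fix a splitting $Vv\overset{\pi}{\Rightarrow}\widetilde V\overset{\iota}{\Rightarrow}Vv$ of the idempotent $Vv\epsilon\ast\psi v\ast\eta'Vv$. Define: $J^w(t):=J(t)$ on 0-cells; on a 1-cell, $J^w(V,\psi)$ is the unique 1-cell $J(t)\to J(t')$ of $\mathcal K$ with $v'J^w(V,\psi)=\widetilde V$ and $v'\epsilon'J^w(V,\psi)=\pi\ast Vv\epsilon\ast\psi v\ast t'\iota$; on a 2-cell $\varrho:(V,\psi)\Rightarrow(W,\phi)$, $J^w(\varrho)$ is the unique 2-cell $J^w(V,\psi)\Rightarrow J^w(W,\phi)$ of $\mathcal K$ with $v'J^w(\varrho)=\pi\ast Wv\epsilon\ast\varrho v\ast\iota$. Then these maps determine a pseudo-functor $J^w:\mathrm{EM}^w(\mathcal K)\to\mathcal K$ (strictly preserving identity 2-cells and vertical composition, and preserving identity 1-cells and horizontal composition up to coherent invertible 2-cells). Its pseudo-natural isomorphism class does not depend on the choice of the splittings $\iota,\pi$.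
   Context: Conventions in a 2-category $\mathcal K$: horizontal composition and whiskering by juxtaposition in the order of functor composition; identity 1-cell of $k$ written $k$, identity 2-cell of $V$ written $V$; vertical composition $\ast$ with $\alpha\ast\beta$ meaning $\beta$ then $\alpha$. A monad $(t,\mu,\eta)$ on $k$: $t:k\to k$, $\mu:tt\Rightarrow t$, $\eta:k\Rightarrow t$, associative and unital. The 2-category $\mathrm{EM}^w(\mathcal K)$: 0-cells are monads; a 1-cell $(t,\mu,\eta)\to(t',\mu',\eta')$ ($t$ on $k$, $t'$ on $k'$) is $(V,\psi)$, $V:k\to k'$, $\psi:t'V\Rightarrow Vt$, with $V\mu\ast\psi t\ast t'\psi=\psi\ast\mu'V$; a 2-cell $(V,\psi)\Rightarrow(W,\phi)$ is $\varrho:V\Rightarrow Wt$ with $W\mu\ast\varrho t\ast\psi=W\mu\ast\phi t\ast t'\varrho$ and $\varrho=W\mu\ast\phi t\ast\eta'Wt\ast\varrho$; identity 1-cell on $t$ is $(k,t)$, identity 2-cell on $(W,\phi)$ is $\phi\ast\eta'W$; 1-cell composite $(V',\psi')\circ(V,\psi)=(V'V,V'\psi\ast\psi'V)$; 2-cell horizontal composite $\varrho'\circ\varrho=W'W\mu\ast W'\varrho t\ast W'\psi\ast\varrho'V$; vertical composite $\tau\bullet\varrho=U\mu\ast\tau t\ast\varrho$. $\mathcal K$ admits Eilenberg–Moore constructions for monads: the inclusion 2-functor $I:\mathcal K\to\mathrm{EM}(\mathcal K)$ into the Lack–Street 2-category of monads has a right 2-adjoint $J$. Then each monad $(t,\mu,\eta)$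 on $k$ determines an adjunction $f\dashv v$, $f:k\to J(t)$, $v:J(t)\to k$, unit $\eta:k\Rightarrow vf$, counit $\epsilon:fv\Rightarrow J(t)$, with $t=vf$, $\mu=v\epsilon f$ (for $t'$: $f',v',\eta',\epsilon'$); and for each 0-cell $l$ the functor $\mathcal K(l,J(t))\to\{t\text{-algebras on }l\}$, $X\mapsto(vX,v\epsilon X)$, $\omega\mapsto v\omega$, is an isomorphism of categories, where a $t$-algebra is a pair $(A:l\to k,\ \alpha:tA\Rightarrow A)$ with $\alpha\ast t\alpha=\alpha\ast\mu A$, $\alpha\ast\eta A=A$, and morphisms $(A,\alpha)\to(B,\beta)$ are $\rho:A\Rightarrow B$ with $\beta\ast t\rho=\rho\ast\alpha$. Idempotent 2-cells split: every $e=e\ast e$ factors as $e=\iota\ast\pi$ with $\pi\ast\iota$ an identity. The 2-cell $Vv\epsilon\ast\psi v\ast\eta'Vv$ is idempotent, $(\widetilde V,\pi\ast Vv\epsilon\ast\psi v\ast t'\iota)$ is a $t'$-algebra on $J(t)$, and $\pi\ast Wv\epsilon\ast\varrho v\ast\iota$ is a morphism of $t'$-algebras, so $J^w$ is well defined. *)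

(* Conventions (as in the paper):
   - [comp1 g f] is g∘f (order of functor composition);
   - [vcomp al be] is "al * be" = be, then al;
   - [hcomp al be] is the horizontal composite (al ∘ be);
     juxtaposition/whiskering  f be  :=  hcomp (id2 f) be,  al f := hcomp al (id2 f);
   - 2-cells are "untyped": [cell a b] is the type of all 2-cells between
     1-cells a -> b, with source/target given by [src2]/[tgt2].  This avoids
     transports along the (strict) equations between 1-cells. *)

Unset Implicit Arguments.


Record TwoCat : Type := {
  ob :> Type;
  hom : ob -> ob -> Type;
  cell : ob -> ob -> Type;
  src2 : forall a b : ob, cell a b -> hom a b;
  tgt2 : forall a b : ob, cell a b -> hom a b;
  id1 : forall a : ob, hom a a;
  comp1 : forall a b c : ob, hom b c -> hom a b -> hom a c;
  id2 : forall a b : ob, hom a b -> cell a b;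
  vcomp : forall a b : ob, cell a b -> cell a b -> cell a b;
  hcomp : forall a b c : ob, cell b c -> cell a b -> cell a c
}.

Arguments hom {t} _ _.
Arguments cell {t} _ _.
Arguments src2 {t a b} _.
Arguments tgt2 {t a b} _.
Arguments id1 {t} a.
Arguments comp1 {t a b c} _ _.
Arguments id2 {t a b} _.
Arguments vcomp {t a b} _ _.
Arguments hcomp {t a b c} _ _.

Definition is2 {K : TwoCat} {a b : K} (al : cell a b) (f g : hom a b) : Prop :=
  src2 al = f /\ tgt2 al = g.

Record strict_2cat (K : TwoCat) : Prop := {
  src_id2 : forall (a b : K) (f : hom a b), src2 (id2 f) = f;
  tgt_id2 : forall (a b : K) (f : hom a b), tgt2 (id2 f) = f;
  src_vcomp : forall (a b : K) (al be : cell a b),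
      tgt2 be = src2 al -> src2 (vcomp al be) = src2 be;
  tgt_vcomp : forall (a b : K) (al be : cell a b),
      tgt2 be = src2 al -> tgt2 (vcomp al be) = tgt2 al;
  src_hcomp : forall (a b c : K) (al : cell b c) (be : cell a b),
      src2 (hcomp al be) = comp1 (src2 al) (src2 be);
  tgt_hcomp : forall (a b c : K) (al : cell b c) (be : cell a b),
      tgt2 (hcomp al be) = comp1 (tgt2 al) (tgt2 be);
  comp1A : forall (a b c d : K) (f : hom c d) (g : hom b c) (h : hom a b),
      comp1 f (comp1 g h) = comp1 (comp1 f g) h;
  comp1_id_l : forall (a b : K) (f : hom a b), comp1 (id1 b) f = f;
  comp1_id_r : forall (a b : K) (f : hom a b), comp1 f (id1 a) = f;
  vcompA : forall (a b : K) (al be ga : cell a b),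
      tgt2 ga = src2 be -> tgt2 be = src2 al ->
      vcomp al (vcomp be ga) = vcomp (vcomp al be) ga;
  vcomp_id_r : forall (a b : K) (al : cell a b), vcomp al (id2 (src2 al)) = al;
  vcomp_id_l : forall (a b : K) (al : cell a b), vcomp (id2 (tgt2 al)) al = al;
  hcompA : forall (a b c d : K) (al : cell c d) (be : cell b c) (ga : cell a b),
      hcomp al (hcomp be ga) = hcomp (hcomp al be) ga;
  hcomp_id_l : forall (a b : K) (al : cell a b), hcomp (id2 (id1 b)) al = al;
  hcomp_id_r : forall (a b : K) (al : cell a b), hcomp al (id2 (id1 a)) = al;
  hcomp_id2 : forall (a b c : K) (f : hom b c) (g : hom a b),
      hcomp (id2 f) (id2 g) = id2 (comp1 f g);
  interchange : forall (a b c : K) (al al' : cell b c) (be be' : cell a b),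
      tgt2 al = src2 al' -> tgt2 be = src2 be' ->
      hcomp (vcomp al' al) (vcomp be' be) = vcomp (hcomp al' be') (hcomp al be)
}.

Definition is_iso2 {K : TwoCat} {a b : K} (al : cell a b) (f g : hom a b) : Prop :=
  is2 al f g /\
  exists be : cell a b, is2 be g f /\ vcomp be al = id2 f /\ vcomp al be = id2 g.

Definition idempotents_split (K : TwoCat) : Prop :=
  forall (a b : K) (f : hom a b) (e : cell a b),
    is2 e f f -> vcomp e e = e ->
    exists (g : hom a b) (pi io : cell a b),
      is2 pi f g /\ is2 io g f /\ vcomp io pi = e /\ vcomp pi io = id2 g.

Record monad (K : TwoCat) : Type := {
  mk : K;
  mt : hom mk mk;
  mmu : cell mk mk;
  meta : cell mk mk
}.
Arguments mk {K} m.
Arguments mt {K} m.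
Arguments mmu {K} m.
Arguments meta {K} m.

Definition is_monad {K : TwoCat} (m : monad K) : Prop :=
  is2 (mmu m) (comp1 (mt m) (mt m)) (mt m) /\
  is2 (meta m) (id1 (mk m)) (mt m) /\
  vcomp (mmu m) (hcomp (mmu m) (id2 (mt m))) =
    vcomp (mmu m) (hcomp (id2 (mt m)) (mmu m)) /\
  vcomp (mmu m) (hcomp (meta m) (id2 (mt m))) = id2 (mt m) /\
  vcomp (mmu m) (hcomp (id2 (mt m)) (meta m)) = id2 (mt m).

Definition is_alg {K : TwoCat} (m : monad K) {l : K}
    (A : hom l (mk m)) (al : cell l (mk m)) : Prop :=
  is2 al (comp1 (mt m) A) A /\
  vcomp al (hcomp (id2 (mt m)) al) = vcomp al (hcomp (mmu m) (id2 A)) /\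
  vcomp al (hcomp (meta m) (id2 A)) = id2 A.

Definition is_alg_mor {K : TwoCat} (m : monad K) {l : K}
    (A : hom l (mk m)) (al : cell l (mk m))
    (B : hom l (mk m)) (be : cell l (mk m)) (rho : cell l (mk m)) : Prop :=
  is2 rho A B /\ vcomp be (hcomp (id2 (mt m)) rho) = vcomp rho al.

Record EMobj {K : TwoCat} (k : K) : Type := {
  Jo : K;
  Jf : hom k Jo;
  Jv : hom Jo k;
  Jeps : cell Jo Jo
}.
Arguments Jo {K k} e.
Arguments Jf {K k} e.
Arguments Jv {K k} e.
Arguments Jeps {K k} e.

(* E is an Eilenberg-Moore construction for m: f -| v with unit eta and
   counit eps, t = vf, mu = v eps f, and for every l the functor
   K(l, J(t)) -> t-Alg(l), X |-> (vX, v eps X), om |-> v om,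
   is an isomorphism of categories (bijective on objects and on hom-sets). *)
Definition is_EM {K : TwoCat} (m : monad K) (E : EMobj (mk m)) : Prop :=
  mt m = comp1 (Jv E) (Jf E) /\
  is2 (Jeps E) (comp1 (Jf E) (Jv E)) (id1 (Jo E)) /\
  mmu m = hcomp (hcomp (id2 (Jv E)) (Jeps E)) (id2 (Jf E)) /\
  vcomp (hcomp (id2 (Jv E)) (Jeps E)) (hcomp (meta m) (id2 (Jv E))) = id2 (Jv E) /\
  vcomp (hcomp (Jeps E) (id2 (Jf E))) (hcomp (id2 (Jf E)) (meta m)) = id2 (Jf E) /\
  (forall (l : K) (A : hom l (mk m)) (al : cell l (mk m)),
      is_alg m A al ->
      exists X : hom l (Jo E),
        (comp1 (Jv E) X = A /\
         hcomp (hcomp (id2 (Jv E)) (Jeps E)) (id2 X) = al) /\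
        forall X' : hom l (Jo E),
          comp1 (Jv E) X' = A /\
          hcomp (hcomp (id2 (Jv E)) (Jeps E)) (id2 X') = al -> X' = X) /\
  (forall (l : K) (X Y : hom l (Jo E)) (rho : cell l (mk m)),
      is_alg_mor m (comp1 (Jv E) X) (hcomp (hcomp (id2 (Jv E)) (Jeps E)) (id2 X))
                   (comp1 (Jv E) Y) (hcomp (hcomp (id2 (Jv E)) (Jeps E)) (id2 Y)) rho ->
      exists om : cell l (Jo E),
        (is2 om X Y /\ hcomp (id2 (Jv E)) om = rho) /\
        forall om' : cell l (Jo E),
          is2 om' X Y /\ hcomp (id2 (Jv E)) om' = rho -> om' = om).

(* a chosen Eilenberg-Moore construction for every monad (the right 2-adjoint J
   on 0-cells together with the induced adjunctions) *)
Definition EMchoice (K : TwoCat) : Type := forall m : monad K, EMobj (mk m).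

Definition EMchoice_ok {K : TwoCat} (EMc : EMchoice K) : Prop :=
  forall m : monad K, is_monad m -> is_EM m (EMc m).

Definition JO {K : TwoCat} (EMc : EMchoice K) (m : monad K) : K := Jo (EMc m).
Definition Jv' {K : TwoCat} (EMc : EMchoice K) (m : monad K) : hom (JO EMc m) (mk m) :=
  Jv (EMc m).
Definition Jeps' {K : TwoCat} (EMc : EMchoice K) (m : monad K) : cell (JO EMc m) (JO EMc m) :=
  Jeps (EMc m).

Definition is_EMw1 {K : TwoCat} (m m' : monad K)
    (V : hom (mk m) (mk m')) (psi : cell (mk m) (mk m')) : Prop :=
  is2 psi (comp1 (mt m') V) (comp1 V (mt m)) /\
  vcomp (hcomp (id2 V) (mmu m)) (vcomp (hcomp psi (id2 (mt m))) (hcomp (id2 (mt m')) psi))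
  = vcomp psi (hcomp (mmu m') (id2 V)).

Definition is_EMw2 {K : TwoCat} (m m' : monad K)
    (V : hom (mk m) (mk m')) (psi : cell (mk m) (mk m'))
    (W : hom (mk m) (mk m')) (phi : cell (mk m) (mk m'))
    (rho : cell (mk m) (mk m')) : Prop :=
  is2 rho V (comp1 W (mt m)) /\
  vcomp (hcomp (id2 W) (mmu m)) (vcomp (hcomp rho (id2 (mt m))) psi)
  = vcomp (hcomp (id2 W) (mmu m)) (vcomp (hcomp phi (id2 (mt m))) (hcomp (id2 (mt m')) rho)) /\
  rho = vcomp (hcomp (id2 W) (mmu m))
          (vcomp (hcomp phi (id2 (mt m)))
             (vcomp (hcomp (meta m') (id2 (comp1 W (mt m)))) rho)).

Definition id1w_psi {K : TwoCat} (m : monad K) : cell (mk m) (mk m) := id2 (mt m).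

Definition comp1w_psi {K : TwoCat} {a b c : K}
    (V' : hom b c) (psi' : cell b c) (V : hom a b) (psi : cell a b) : cell a c :=
  vcomp (hcomp (id2 V') psi) (hcomp psi' (id2 V)).

Definition id2w {K : TwoCat} (m' : monad K) {a : K}
    (W : hom a (mk m')) (phi : cell a (mk m')) : cell a (mk m') :=
  vcomp phi (hcomp (meta m') (id2 W)).

Definition vcomp2w {K : TwoCat} (m : monad K) {b : K}
    (U : hom (mk m) b) (tau rho : cell (mk m) b) : cell (mk m) b :=
  vcomp (hcomp (id2 U) (mmu m)) (vcomp (hcomp tau (id2 (mt m))) rho).

Definition hcomp2w {K : TwoCat} (m : monad K) {b c : K}
    (W' : hom b c) (W : hom (mk m) b) (V : hom (mk m) b) (psi : cell (mk m) b)
    (rho' : cell b c) (rho : cell (mk m) b) : cell (mk m) c :=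
  vcomp (hcomp (id2 (comp1 W' W)) (mmu m))
    (vcomp (hcomp (id2 W') (hcomp rho (id2 (mt m))))
       (vcomp (hcomp (id2 W') psi) (hcomp rho' (id2 V)))).

Record splitting {K : TwoCat} (a b : K) : Type := {
  sobj : hom a b;
  spi : cell a b;
  siota : cell a b
}.
Arguments sobj {K a b} s.
Arguments spi {K a b} s.
Arguments siota {K a b} s.

Definition idemw {K : TwoCat} (EMc : EMchoice K) (m m' : monad K)
    (V : hom (mk m) (mk m')) (psi : cell (mk m) (mk m')) : cell (JO EMc m) (mk m') :=
  vcomp (hcomp (id2 (comp1 V (Jv' EMc m))) (Jeps' EMc m))
    (vcomp (hcomp psi (id2 (Jv' EMc m)))
       (hcomp (meta m') (id2 (comp1 V (Jv' EMc m))))).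

Definition is_splitting_of {K : TwoCat} {a b : K} (e : cell a b) (f : hom a b)
    (s : splitting a b) : Prop :=
  is2 (spi s) f (sobj s) /\ is2 (siota s) (sobj s) f /\
  vcomp (siota s) (spi s) = e /\ vcomp (spi s) (siota s) = id2 (sobj s).

Definition split_choice {K : TwoCat} (EMc : EMchoice K) : Type :=
  forall m m' : monad K, hom (mk m) (mk m') -> cell (mk m) (mk m') ->
    splitting (JO EMc m) (mk m').

Definition split_choice_ok {K : TwoCat} (EMc : EMchoice K) (spl : split_choice EMc) : Prop :=
  forall (m m' : monad K) (V : hom (mk m) (mk m')) (psi : cell (mk m) (mk m')),
    is_monad m -> is_monad m' -> is_EMw1 m m' V psi ->
    is_splitting_of (idemw EMc m m' V psi) (comp1 V (Jv' EMc m)) (spl m m' V psi).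

(* types of the action of a (candidate) functor EM^w(K) -> K on 1- and 2-cells,
   with J^w(t) = J(t) on 0-cells *)
Definition J1type {K : TwoCat} (EMc : EMchoice K) : Type :=
  forall m m' : monad K, hom (mk m) (mk m') -> cell (mk m) (mk m') ->
    hom (JO EMc m) (JO EMc m').

(* the 2-cell action takes the source 1-cell (V,psi), target 1-cell (W,phi)
   and the 2-cell rho *)
Definition J2type {K : TwoCat} (EMc : EMchoice K) : Type :=
  forall m m' : monad K,
    hom (mk m) (mk m') -> cell (mk m) (mk m') ->
    hom (mk m) (mk m') -> cell (mk m) (mk m') ->
    cell (mk m) (mk m') -> cell (JO EMc m) (JO EMc m').

Definition Utype {K : TwoCat} (EMc : EMchoice K) : Type :=
  forall m : monad K, cell (JO EMc m) (JO EMc m).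

Definition Ctype {K : TwoCat} (EMc : EMchoice K) : Type :=
  forall m1 m2 m3 : monad K,
    hom (mk m2) (mk m3) -> cell (mk m2) (mk m3) ->
    hom (mk m1) (mk m2) -> cell (mk m1) (mk m2) ->
    cell (JO EMc m1) (JO EMc m3).

Definition is_Jw {K : TwoCat} (EMc : EMchoice K) (spl : split_choice EMc)
    (F1 : J1type EMc) (F2 : J2type EMc) : Prop :=
  (forall (m m' : monad K) (V : hom (mk m) (mk m')) (psi : cell (mk m) (mk m')),
      is_monad m -> is_monad m' -> is_EMw1 m m' V psi ->
      comp1 (Jv' EMc m') (F1 m m' V psi) = sobj (spl m m' V psi) /\
      hcomp (hcomp (id2 (Jv' EMc m')) (Jeps' EMc m')) (id2 (F1 m m' V psi)) =
        vcomp (spi (spl m m' V psi))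
          (vcomp (hcomp (id2 (comp1 V (Jv' EMc m))) (Jeps' EMc m))
             (vcomp (hcomp psi (id2 (Jv' EMc m)))
                (hcomp (id2 (mt m')) (siota (spl m m' V psi)))))) /\
  (forall (m m' : monad K) (V W : hom (mk m) (mk m')) (psi phi rho : cell (mk m) (mk m')),
      is_monad m -> is_monad m' -> is_EMw1 m m' V psi -> is_EMw1 m m' W phi ->
      is_EMw2 m m' V psi W phi rho ->
      is2 (F2 m m' V psi W phi rho) (F1 m m' V psi) (F1 m m' W phi) /\
      hcomp (id2 (Jv' EMc m')) (F2 m m' V psi W phi rho) =
        vcomp (spi (spl m m' W phi))
          (vcomp (hcomp (id2 (comp1 W (Jv' EMc m))) (Jeps' EMc m))
             (vcomp (hcomp rho (id2 (Jv' EMc m)))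
                (siota (spl m m' V psi))))).

Definition is_pseudofunctor {K : TwoCat} (EMc : EMchoice K)
    (F1 : J1type EMc) (F2 : J2type EMc) (u : Utype EMc) (c : Ctype EMc) : Prop :=
  (forall (m m' : monad K) (V W : hom (mk m) (mk m')) (psi phi rho : cell (mk m) (mk m')),
      is_monad m -> is_monad m' -> is_EMw1 m m' V psi -> is_EMw1 m m' W phi ->
      is_EMw2 m m' V psi W phi rho ->
      is2 (F2 m m' V psi W phi rho) (F1 m m' V psi) (F1 m m' W phi)) /\
  (forall (m m' : monad K) (W : hom (mk m) (mk m')) (phi : cell (mk m) (mk m')),
      is_monad m -> is_monad m' -> is_EMw1 m m' W phi ->
      F2 m m' W phi W phi (id2w m' W phi) = id2 (F1 m m' W phi)) /\
  (forall (m m' : monad K) (V W U : hom (mk m) (mk m'))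
          (psi phi chi rho tau : cell (mk m) (mk m')),
      is_monad m -> is_monad m' ->
      is_EMw1 m m' V psi -> is_EMw1 m m' W phi -> is_EMw1 m m' U chi ->
      is_EMw2 m m' V psi W phi rho -> is_EMw2 m m' W phi U chi tau ->
      F2 m m' V psi U chi (vcomp2w m U tau rho) =
        vcomp (F2 m m' W phi U chi tau) (F2 m m' V psi W phi rho)) /\
  (forall m : monad K, is_monad m ->
      is_iso2 (u m) (id1 (JO EMc m)) (F1 m m (id1 (mk m)) (id1w_psi m))) /\
  (forall (m1 m2 m3 : monad K) (V : hom (mk m1) (mk m2)) (psi : cell (mk m1) (mk m2))
          (V' : hom (mk m2) (mk m3)) (psi' : cell (mk m2) (mk m3)),
      is_monad m1 -> is_monad m2 -> is_monad m3 ->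
      is_EMw1 m1 m2 V psi -> is_EMw1 m2 m3 V' psi' ->
      is_iso2 (c m1 m2 m3 V' psi' V psi)
        (comp1 (F1 m2 m3 V' psi') (F1 m1 m2 V psi))
        (F1 m1 m3 (comp1 V' V) (comp1w_psi V' psi' V psi))) /\
  (forall (m1 m2 m3 : monad K)
          (V W : hom (mk m1) (mk m2)) (psi phi rho : cell (mk m1) (mk m2))
          (V' W' : hom (mk m2) (mk m3)) (psi' phi' rho' : cell (mk m2) (mk m3)),
      is_monad m1 -> is_monad m2 -> is_monad m3 ->
      is_EMw1 m1 m2 V psi -> is_EMw1 m1 m2 W phi ->
      is_EMw1 m2 m3 V' psi' -> is_EMw1 m2 m3 W' phi' ->
      is_EMw2 m1 m2 V psi W phi rho -> is_EMw2 m2 m3 V' psi' W' phi' rho' ->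
      vcomp (c m1 m2 m3 W' phi' W phi)
        (hcomp (F2 m2 m3 V' psi' W' phi' rho') (F2 m1 m2 V psi W phi rho)) =
      vcomp (F2 m1 m3 (comp1 V' V) (comp1w_psi V' psi' V psi)
                      (comp1 W' W) (comp1w_psi W' phi' W phi)
                      (hcomp2w m1 W' W V psi rho' rho))
        (c m1 m2 m3 V' psi' V psi)) /\
  (forall (m1 m2 m3 m4 : monad K)
          (V : hom (mk m1) (mk m2)) (psi : cell (mk m1) (mk m2))
          (V' : hom (mk m2) (mk m3)) (psi' : cell (mk m2) (mk m3))
          (V'' : hom (mk m3) (mk m4)) (psi'' : cell (mk m3) (mk m4)),
      is_monad m1 -> is_monad m2 -> is_monad m3 -> is_monad m4 ->
      is_EMw1 m1 m2 V psi -> is_EMw1 m2 m3 V' psi' -> is_EMw1 m3 m4 V'' psi'' ->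
      vcomp (c m1 m3 m4 V'' psi'' (comp1 V' V) (comp1w_psi V' psi' V psi))
        (hcomp (id2 (F1 m3 m4 V'' psi'')) (c m1 m2 m3 V' psi' V psi)) =
      vcomp (c m1 m2 m4 (comp1 V'' V') (comp1w_psi V'' psi'' V' psi') V psi)
        (hcomp (c m2 m3 m4 V'' psi'' V' psi') (id2 (F1 m1 m2 V psi)))) /\
  (forall (m m' : monad K) (V : hom (mk m) (mk m')) (psi : cell (mk m) (mk m')),
      is_monad m -> is_monad m' -> is_EMw1 m m' V psi ->
      vcomp (c m m m' V psi (id1 (mk m)) (id1w_psi m))
        (hcomp (id2 (F1 m m' V psi)) (u m)) = id2 (F1 m m' V psi) /\
      vcomp (c m m' m' (id1 (mk m')) (id1w_psi m') V psi)
        (hcomp (u m') (id2 (F1 m m' V psi))) = id2 (F1 m m' V psi)).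

Definition is_psnat_iso {K : TwoCat} (EMc : EMchoice K)
    (F1 : J1type EMc) (F2 : J2type EMc) (uF : Utype EMc) (cF : Ctype EMc)
    (G1 : J1type EMc) (G2 : J2type EMc) (uG : Utype EMc) (cG : Ctype EMc)
    (s0 : forall m : monad K, hom (JO EMc m) (JO EMc m))
    (s1 : forall m m' : monad K, hom (mk m) (mk m') -> cell (mk m) (mk m') ->
            cell (JO EMc m) (JO EMc m')) : Prop :=
  (forall m : monad K, is_monad m ->
      exists r : hom (JO EMc m) (JO EMc m),
        comp1 r (s0 m) = id1 (JO EMc m) /\ comp1 (s0 m) r = id1 (JO EMc m)) /\
  (forall (m m' : monad K) (V : hom (mk m) (mk m')) (psi : cell (mk m) (mk m')),
      is_monad m -> is_monad m' -> is_EMw1 m m' V psi ->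
      is_iso2 (s1 m m' V psi) (comp1 (G1 m m' V psi) (s0 m))
                              (comp1 (s0 m') (F1 m m' V psi))) /\
  (forall (m m' : monad K) (V W : hom (mk m) (mk m')) (psi phi rho : cell (mk m) (mk m')),
      is_monad m -> is_monad m' -> is_EMw1 m m' V psi -> is_EMw1 m m' W phi ->
      is_EMw2 m m' V psi W phi rho ->
      vcomp (s1 m m' W phi) (hcomp (G2 m m' V psi W phi rho) (id2 (s0 m))) =
      vcomp (hcomp (id2 (s0 m')) (F2 m m' V psi W phi rho)) (s1 m m' V psi)) /\
  (forall m : monad K, is_monad m ->
      vcomp (s1 m m (id1 (mk m)) (id1w_psi m)) (hcomp (uG m) (id2 (s0 m))) =
      hcomp (id2 (s0 m)) (uF m)) /\
  (forall (m1 m2 m3 : monad K) (V : hom (mk m1) (mk m2)) (psi : cell (mk m1) (mk m2))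
          (V' : hom (mk m2) (mk m3)) (psi' : cell (mk m2) (mk m3)),
      is_monad m1 -> is_monad m2 -> is_monad m3 ->
      is_EMw1 m1 m2 V psi -> is_EMw1 m2 m3 V' psi' ->
      vcomp (s1 m1 m3 (comp1 V' V) (comp1w_psi V' psi' V psi))
        (hcomp (cG m1 m2 m3 V' psi' V psi) (id2 (s0 m1))) =
      vcomp (hcomp (id2 (s0 m3)) (cF m1 m2 m3 V' psi' V psi))
        (vcomp (hcomp (s1 m2 m3 V' psi') (id2 (F1 m1 m2 V psi)))
           (hcomp (id2 (G1 m2 m3 V' psi')) (s1 m1 m2 V psi)))).

(* For a 1-cell (V, psi) of EM^w(K), the cell [V v eps * psi v] makes [V v] a weak
   t'-algebra: associative, but unital only up to the idempotent [V v eps * psi v * eta' V v].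
   Splitting this idempotent as [V v =pi=> V~ =iota=> V v] gives a genuine t'-algebra on V~,
   hence V~ = v' X for a unique X = J^w(V, psi).  Since v' is faithful and reflects algebra
   morphisms, every structure cell is obtained as the lift along v' of a composite of the
   splittings (pi for the unitor, pi * V' iota * iota J^w(V) for the compositor), and every
   coherence axiom is checked after whiskering with v', where it reduces to the identities
   satisfied by a split weak algebra and its morphisms.  For two choices of splittings, the
   lifts of [pi * iota'] are invertible 2-cells natural in (V, psi); transporting the
   pseudo-functor structure along them gives a pseudo-natural isomorphism whose components
   on objects are identities. *)

From Stdlib Require Import List ClassicalEpsilon.

Existing Class strict_2cat.

Section StrictTwoCategory.
Context {K : TwoCat} {HK : strict_2cat K}.

Lemma src2_id2 (a b : K) (f : hom a b) : src2 (id2 f) = f. Proof. apply (src_id2 _ HK). Qed.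
Lemma tgt2_id2 (a b : K) (f : hom a b) : tgt2 (id2 f) = f. Proof. apply (tgt_id2 _ HK). Qed.
Lemma comp1_assoc (a b c d : K) (f : hom c d) (g : hom b c) (h : hom a b) :
  comp1 f (comp1 g h) = comp1 (comp1 f g) h. Proof. apply (comp1A _ HK). Qed.
Lemma comp1_id1l (a b : K) (f : hom a b) : comp1 (id1 b) f = f. Proof. apply (comp1_id_l _ HK). Qed.
Lemma comp1_id1r (a b : K) (f : hom a b) : comp1 f (id1 a) = f. Proof. apply (comp1_id_r _ HK). Qed.
Lemma src2_hcomp (a b c : K) (x : cell b c) (y : cell a b) :
  src2 (hcomp x y) = comp1 (src2 x) (src2 y). Proof. apply (src_hcomp _ HK). Qed.
Lemma tgt2_hcomp (a b c : K) (x : cell b c) (y : cell a b) :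
  tgt2 (hcomp x y) = comp1 (tgt2 x) (tgt2 y). Proof. apply (tgt_hcomp _ HK). Qed.

Lemma is2_vcomp (a b : K) (x y : cell a b) f g g' h :
  is2 y f g -> is2 x g' h -> g = g' -> is2 (vcomp x y) f h.
Proof.
  intros [H1 H2] [H3 H4] E; subst. split.
  - rewrite (src_vcomp _ HK); congruence.
  - rewrite (tgt_vcomp _ HK); congruence.
Qed.

Lemma is2_hcomp (a b c : K) (x : cell b c) (y : cell a b) f g f' g' :
  is2 x f g -> is2 y f' g' -> is2 (hcomp x y) (comp1 f f') (comp1 g g').
Proof. intros [H1 H2] [H3 H4]; split; rewrite ?src2_hcomp, ?tgt2_hcomp; congruence. Qed.

Lemma is2_id2 (a b : K) (f : hom a b) : is2 (id2 f) f f.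
Proof. split; [apply src2_id2|apply tgt2_id2]. Qed.

Lemma is2_congr (a b : K) (x : cell a b) f g f' g' :
  is2 x f g -> f = f' -> g = g' -> is2 x f' g'.
Proof. intros H E1 E2; subst; exact H. Qed.

Lemma is2_composable (a b : K) (x y : cell a b) f g g' h :
  is2 y f g -> is2 x g' h -> g = g' -> tgt2 y = src2 x.
Proof. intros [_ H1] [H2 _] E; congruence. Qed.

Lemma tgt2_is2 (a b : K) (x : cell a b) f g g' : is2 x f g -> g = g' -> tgt2 x = g'.
Proof. intros [_ H] <-; exact H. Qed.

Lemma src2_is2 (a b : K) (x : cell a b) f f' g : is2 x f g -> f = f' -> src2 x = f'.
Proof. intros [H _] <-; exact H. Qed.

(* [vchain d [x1; ...; xn]] is the vertical composite x1 * ... * xn ([d] is only used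
   for the empty list). *)
Fixpoint vchain {a b : K} (d : cell a b) (l : list (cell a b)) : cell a b :=
  match l with
  | nil => d
  | x :: l' => match l' with nil => x | _ => vcomp x (vchain d l') end
  end.

Fixpoint vcomposable {a b : K} (l : list (cell a b)) : Prop :=
  match l with
  | nil => True
  | x :: l' => match l' with nil => True | y :: _ => tgt2 y = src2 x /\ vcomposable l' end
  end.

Lemma vchain_cons {a b : K} (d x : cell a b) l :
  l <> nil -> vchain d (x :: l) = vcomp x (vchain d l).
Proof. destruct l; [congruence|reflexivity]. Qed.

Lemma tgt2_vchain {a b : K} (d : cell a b) x l :
  vcomposable (x :: l) -> tgt2 (vchain d (x :: l)) = tgt2 x.
Proof.
  revert x. induction l as [|y l IH]; intros x W; [reflexivity|].
  destruct W as [W1 W2]. rewrite vchain_cons by congruence.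
  rewrite (tgt_vcomp _ HK); auto. rewrite IH; auto.
Qed.

Lemma src2_vchain {a b : K} (d : cell a b) x l :
  vcomposable (x :: l) -> src2 (vchain d (x :: l)) = src2 (last (x :: l) d).
Proof.
  revert x. induction l as [|y l IH]; intros x W; [reflexivity|].
  destruct W as [W1 W2]. rewrite vchain_cons by congruence.
  rewrite (src_vcomp _ HK); [apply IH; auto|]. rewrite tgt2_vchain; auto.
Qed.

Lemma vcomposable_app {a b : K} (l1 l2 : list (cell a b)) (d : cell a b) :
  vcomposable (l1 ++ l2) ->
  vcomposable l1 /\ vcomposable l2 /\
  (l1 <> nil -> l2 <> nil -> tgt2 (hd d l2) = src2 (last l1 d)).
Proof.
  induction l1 as [|x l1 IH]; intros W.
  - simpl in *. repeat split; auto. congruence.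
  - destruct l1 as [|y l1].
    + simpl in *. destruct l2 as [|z l2]; simpl in *; repeat split; tauto.
    + change ((x :: y :: l1) ++ l2) with (x :: y :: (l1 ++ l2)) in W.
      destruct W as [W1 W2]. destruct (IH W2) as (A1 & A2 & A3).
      repeat split; auto. intros _ N. exact (A3 ltac:(congruence) N).
Qed.

Lemma vchain_app {a b : K} (d : cell a b) l1 l2 :
  vcomposable (l1 ++ l2) -> l1 <> nil -> l2 <> nil ->
  vchain d (l1 ++ l2) = vcomp (vchain d l1) (vchain d l2).
Proof.
  induction l1 as [|x l1 IH]; [congruence|]. intros W _ N2.
  destruct l1 as [|y l1].
  - simpl. destruct l2; [congruence|reflexivity].
  - pose proof (vcomposable_app _ _ d W) as (A1 & A2 & A3).
    change ((x :: y :: l1) ++ l2) with (x :: ((y :: l1) ++ l2)) in *.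
    rewrite vchain_cons by (simpl; congruence).
    rewrite (vchain_cons d x (y :: l1)) by congruence.
    simpl in W. destruct W as [W1 W2].
    rewrite IH; auto; try congruence.
    destruct l2 as [|z l2]; [congruence|].
    apply (vcompA _ HK).
    + rewrite tgt2_vchain by exact A2. rewrite src2_vchain by exact (proj2 A1).
      exact (A3 ltac:(congruence) ltac:(congruence)).
    + rewrite tgt2_vchain; auto. apply (proj2 A1).
Qed.

Lemma vcomposable_tail {a b : K} (x : cell a b) l : vcomposable (x :: l) -> vcomposable l.
Proof. destruct l; simpl; tauto. Qed.

Lemma vchain_group {a b : K} (d : cell a b) (P S Q : list (cell a b)) :
  vcomposable (P ++ S ++ Q) -> S <> nil ->
  vchain d (P ++ S ++ Q) = vchain d (P ++ vchain d S :: Q).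
Proof.
  intros W NS. induction P as [|x P IH].
  - simpl. destruct Q as [|q Q].
    + rewrite app_nil_r. destruct S as [|s S]; [congruence|]. destruct S; reflexivity.
    + rewrite vchain_app by (auto; congruence). reflexivity.
  - simpl ((x :: P) ++ _). rewrite !vchain_cons.
    + f_equal. exact (IH (vcomposable_tail _ _ W)).
    + destruct P; simpl; congruence.
    + destruct P; simpl; destruct S; simpl; congruence.
Qed.

Lemma vcomp_assoc (a b : K) (x y z : cell a b) :
  tgt2 z = src2 y -> tgt2 y = src2 x -> vcomp (vcomp x y) z = vcomp x (vcomp y z).
Proof. intros; symmetry; apply (vcompA _ HK); auto. Qed.
Lemma vcomp_id2l (a b : K) f (x : cell a b) : tgt2 x = f -> vcomp (id2 f) x = x.
Proof. intros <-. apply (vcomp_id_l _ HK). Qed.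
Lemma vcomp_id2r (a b : K) f (x : cell a b) : src2 x = f -> vcomp x (id2 f) = x.
Proof. intros <-. apply (vcomp_id_r _ HK). Qed.
Lemma hcomp_id1l (a b : K) (x : cell a b) : hcomp (id2 (id1 b)) x = x.
Proof. apply (hcomp_id_l _ HK). Qed.
Lemma hcomp_id1r (a b : K) (x : cell a b) : hcomp x (id2 (id1 a)) = x.
Proof. apply (hcomp_id_r _ HK). Qed.
Lemma hcomp_id2s (a b c : K) (f : hom b c) (g : hom a b) :
  hcomp (id2 f) (id2 g) = id2 (comp1 f g).
Proof. apply (hcomp_id2 _ HK). Qed.
Lemma hcomp_assoc (a b c d : K) (x : cell c d) (y : cell b c) (z : cell a b) :
  hcomp x (hcomp y z) = hcomp (hcomp x y) z.
Proof. apply (hcompA _ HK). Qed.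
Lemma whisker_l_l (a b c d : K) (L : hom c d) (M : hom b c) (x : cell a b) :
  hcomp (id2 L) (hcomp (id2 M) x) = hcomp (id2 (comp1 L M)) x.
Proof. rewrite hcomp_assoc, hcomp_id2s; reflexivity. Qed.
Lemma whisker_r_r (a b c d : K) (x : cell c d) (R : hom b c) (S : hom a b) :
  hcomp (hcomp x (id2 R)) (id2 S) = hcomp x (id2 (comp1 R S)).
Proof. rewrite <- hcomp_assoc, hcomp_id2s; reflexivity. Qed.
Lemma whisker_l_r (a b c d : K) (L : hom c d) (x : cell b c) (R : hom a b) :
  hcomp (hcomp (id2 L) x) (id2 R) = hcomp (id2 L) (hcomp x (id2 R)).
Proof. rewrite hcomp_assoc; reflexivity. Qed.
Lemma vcomp_id2_id2 (a b : K) (f : hom a b) : vcomp (id2 f) (id2 f) = id2 f.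
Proof. rewrite <- (tgt2_id2 _ _ f) at 1. apply (vcomp_id_l _ HK). Qed.

Lemma vcomp_hcomp (a b c : K) (x x' : cell b c) (y y' : cell a b) :
  tgt2 x' = src2 x -> tgt2 y' = src2 y ->
  vcomp (hcomp x y) (hcomp x' y') = hcomp (vcomp x x') (vcomp y y').
Proof. intros E1 E2. symmetry. apply (interchange _ HK); auto. Qed.

Lemma whisker_l_vcomp (a b c : K) (L : hom b c) (x y : cell a b) :
  tgt2 y = src2 x -> hcomp (id2 L) (vcomp x y) = vcomp (hcomp (id2 L) x) (hcomp (id2 L) y).
Proof.
  intros E. rewrite vcomp_hcomp, vcomp_id2_id2; auto. rewrite src2_id2, tgt2_id2; reflexivity.
Qed.
Lemma whisker_r_vcomp (a b c : K) (R : hom a b) (x y : cell b c) :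
  tgt2 y = src2 x -> hcomp (vcomp x y) (id2 R) = vcomp (hcomp x (id2 R)) (hcomp y (id2 R)).
Proof.
  intros E. rewrite vcomp_hcomp, vcomp_id2_id2; auto. rewrite src2_id2, tgt2_id2; reflexivity.
Qed.
Lemma hcomp_split_l (a b c : K) (x : cell b c) (y : cell a b) :
  hcomp x y = vcomp (hcomp x (id2 (tgt2 y))) (hcomp (id2 (src2 x)) y).
Proof.
  rewrite vcomp_hcomp by (rewrite ?src2_id2, ?tgt2_id2; reflexivity).
  rewrite (vcomp_id_r _ HK), (vcomp_id_l _ HK). reflexivity.
Qed.
Lemma hcomp_split_r (a b c : K) (x : cell b c) (y : cell a b) :
  hcomp x y = vcomp (hcomp (id2 (tgt2 x)) y) (hcomp x (id2 (src2 y))).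
Proof.
  rewrite vcomp_hcomp by (rewrite ?src2_id2, ?tgt2_id2; reflexivity).
  rewrite (vcomp_id_r _ HK), (vcomp_id_l _ HK). reflexivity.
Qed.
End StrictTwoCategory.

(* Marks an equation that the normalisation tactics below use as a left-to-right rewrite
   rule (typically [t = v f] and [mu = v eps f] for an Eilenberg-Moore adjunction). *)
Definition hom_rule (P : Prop) : Prop := P.
Lemma hom_ruleI (P : Prop) : P -> hom_rule P. Proof. exact (fun x => x). Qed.

Ltac hom_rules :=
  repeat match goal with H : hom_rule (?x = ?y) |- context [?x] => rewrite (H : x = y) end.
Ltac hom_rules_in H := repeat match goal with E : hom_rule (?x = ?y) |- _ =>
    match type of H with context [x] => rewrite (E : x = y) in H end end.
Ltac hom_assoc :=
  rewrite ?comp1_id1l, ?comp1_id1r; rewrite <- ?comp1_assoc; rewrite ?comp1_id1l, ?comp1_id1r.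
Ltac hom_eq :=
  first [ reflexivity
        | hom_assoc; reflexivity
        | hom_rules; repeat first [ rewrite comp1_id1l | rewrite comp1_id1r | rewrite <- comp1_assoc ];
          reflexivity ].

Ltac is2_infer :=
  lazymatch goal with
  | |- is2 (vcomp _ _) _ _ => eapply is2_vcomp; [is2_infer|is2_infer|hom_eq]
  | |- is2 (hcomp _ _) _ _ => eapply is2_hcomp; [is2_infer|is2_infer]
  | |- is2 (id2 _) _ _ => eapply is2_id2
  | _ => eassumption
  end.
Ltac is2_solve := eapply is2_congr; [is2_infer|hom_eq|hom_eq].
Ltac composable := eapply is2_composable; [is2_infer|is2_infer|hom_eq].

Ltac hom_src_tgt :=
  rewrite ?src2_hcomp, ?tgt2_hcomp, ?src2_id2, ?tgt2_id2;
  repeat first [ match goal with H : is2 ?x _ _ |- context [src2 ?x] => rewrite (proj1 H) end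
               | match goal with H : is2 ?x _ _ |- context [tgt2 ?x] => rewrite (proj2 H) end ].
Ltac hom_norm0 := hom_src_tgt; hom_assoc.
Ltac hom_norm := hom_rules; hom_src_tgt; hom_rules; hom_assoc.
Ltac hom_norm_in H := hom_rules_in H; rewrite ?comp1_id1l, ?comp1_id1r in H;
  rewrite <- ?comp1_assoc in H; rewrite ?comp1_id1l, ?comp1_id1r in H.
Ltac is2_norm := repeat match goal with H : is2 _ _ _ |- _ => progress (hom_norm_in H) end.

(* Normal form of a 2-cell: a right-nested vertical chain of whiskered cells [L (x R)],
   with right-nested 1-cells. *)
Ltac cell_step :=
  first [ rewrite whisker_l_l | rewrite whisker_r_r | rewrite whisker_l_r
        | rewrite hcomp_id1l | rewrite hcomp_id1r | rewrite hcomp_id2s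
        | rewrite whisker_l_vcomp by composable | rewrite whisker_r_vcomp by composable
        | rewrite vcomp_assoc by composable
        | rewrite vcomp_id2l by (eapply tgt2_is2; [is2_infer|hom_eq])
        | rewrite vcomp_id2r by (eapply src2_is2; [is2_infer|hom_eq]) ].
Ltac cnorm := hom_norm; repeat (progress (repeat cell_step); hom_norm).
Ltac cnorm0 := hom_norm0; repeat (progress (repeat cell_step); hom_norm0).
Tactic Notation "cnorm" "in" ident(H) := revert H; cnorm; intro H.

Ltac reify_vchain E :=
  match E with
  | vcomp ?x ?r => let l := reify_vchain r in constr:(x :: l)
  | _ => constr:(E :: nil)
  end.

(* [focus i k] brackets the [k] factors starting at position [i] of the left-hand
   chain; [rw_at i k E] then rewrites that block with [E]. *)
Ltac focus i k :=
  match goal with |- ?L = ?R =>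
    let l := reify_vchain L in
    let P := eval cbv [firstn skipn Nat.add] in (firstn i l) in
    let S := eval cbv [firstn skipn Nat.add] in (firstn k (skipn i l)) in
    let Q := eval cbv [firstn skipn Nat.add] in (skipn (i+k) l) in
    transitivity (vchain L (P ++ vchain L S :: Q));
      [ exact (vchain_group L P S Q
                 ltac:(cbv [vcomposable app]; repeat split; composable) ltac:(discriminate))
      | cbv [vchain app] ]
  end.
Ltac rw_at i k E := focus i k; rewrite E; cnorm0.
Ltac rw_at_rhs i k E := symmetry; rw_at i k E; symmetry.

Tactic Notation "whisker_l" constr(L) "in" ident(H) :=
  apply (f_equal (fun z => hcomp (id2 L) z)) in H; cbv beta in H; cnorm in H.
Tactic Notation "whisker_r" constr(R) "in" ident(H) :=
  apply (f_equal (fun z => hcomp z (id2 R))) in H; cbv beta in H; cnorm in H.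

Ltac parse_whisker x k :=
  lazymatch x with
  | hcomp (id2 ?L) (hcomp ?a (id2 ?R)) => k L a R
  | hcomp (id2 ?L) ?a => lazymatch type of a with cell ?a0 _ => k L a (id1 a0) end
  | hcomp ?a (id2 ?R) => lazymatch type of a with cell _ ?b0 => k (id1 b0) a R end
  | _ => lazymatch type of x with cell ?a0 ?b0 => k (id1 b0) x (id1 a0) end
  end.
Ltac nth_factor i :=
  match goal with |- ?L = _ =>
    let l := reify_vchain L in
    let x := eval cbv [nth] in (nth i l L) in x end.
Ltac hom_app a s :=
  lazymatch a with
  | id1 _ => s
  | comp1 ?x ?r => let r' := hom_app r s in constr:(comp1 x r')
  | _ => lazymatch s with id1 _ => a | _ => constr:(comp1 a s) end
  end.
Ltac hom_flat h :=
  lazymatch h with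
  | comp1 ?a ?b => let a' := hom_flat a in let b' := hom_flat b in hom_app a' b'
  | id1 _ => h
  | _ => match goal with
         | H : hom_rule (h = ?y) |- _ => hom_flat y
         | _ => h
         end
  end.
Ltac hom_strip P L :=
  lazymatch P with
  | id1 _ => L
  | comp1 ?p ?P' => lazymatch L with comp1 p ?L' => hom_strip P' L' end
  | _ => lazymatch L with
         | comp1 P ?L' => L'
         | P => lazymatch type of P with hom ?b _ => constr:(id1 b) end
         end
  end.

(* [exchange i] (resp. [exchange' i]) uses the interchange law to swap factors [i] and
   [i+1] of the left-hand chain when the cell of factor [i] (resp. [i+1]) is whiskered
   strictly to the left of the other one. *)
Ltac exchange i :=
  let x1 := nth_factor i in let x2 := nth_factor (S i) in
  parse_whisker x1 ltac:(fun L al X1 =>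
  parse_whisker x2 ltac:(fun L2 a2 R =>
    let H := fresh in
    eassert (H : is2 al _ _) by is2_infer;
    lazymatch type of H with is2 _ ?f _ =>
    clear H;
    let P0 := hom_flat L in let f' := hom_flat f in let P := hom_app P0 f' in
    let L2' := hom_flat L2 in let X := hom_strip P L2' in
    let be := constr:(hcomp (id2 X) a2) in
    let E := fresh "E" in
    assert (E : vcomp x1 x2 =
       vcomp (hcomp (id2 (comp1 L (tgt2 al))) (hcomp be (id2 R)))
             (hcomp (id2 L) (hcomp al (id2 (comp1 (src2 be) R)))));
    [ transitivity (hcomp (id2 L) (hcomp (hcomp al be) (id2 R)));
      [ rewrite (@hcomp_split_l _ _ _ _ _ al be); cnorm; reflexivity
      | rewrite (@hcomp_split_r _ _ _ _ _ al be); cnorm; reflexivity ]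
    | cnorm in E; focus i 2; rewrite E; clear E; cnorm0 ] end)).
Ltac exchange' i :=
  let x1 := nth_factor i in let x2 := nth_factor (S i) in
  parse_whisker x1 ltac:(fun L1 a1 R =>
  parse_whisker x2 ltac:(fun L al X2 =>
    let H := fresh in
    eassert (H : is2 al _ _) by is2_infer;
    lazymatch type of H with is2 _ _ ?g =>
    clear H;
    let P0 := hom_flat L in let g' := hom_flat g in let P := hom_app P0 g' in
    let L1' := hom_flat L1 in let X := hom_strip P L1' in
    let be := constr:(hcomp (id2 X) a1) in
    let E := fresh "E" in
    assert (E : vcomp x1 x2 =
       vcomp (hcomp (id2 L) (hcomp al (id2 (comp1 (tgt2 be) R))))
             (hcomp (id2 (comp1 L (src2 al))) (hcomp be (id2 R))));
    [ transitivity (hcomp (id2 L) (hcomp (hcomp al be) (id2 R)));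
      [ rewrite (@hcomp_split_r _ _ _ _ _ al be); cnorm; reflexivity
      | rewrite (@hcomp_split_l _ _ _ _ _ al be); cnorm; reflexivity ]
    | cnorm in E; focus i 2; rewrite E; clear E; cnorm0 ] end)).

(* A weak t-algebra (A, be) is associative but not necessarily unital, so [be * eta A] is
   only idempotent; [split_weak_alg] packs such an algebra with a splitting
   [A =pi=> At =io=> A] of this idempotent. *)
Definition split_weak_alg {K : TwoCat} (n : monad K) (l : K) (A : hom l (mk n))
    (be : cell l (mk n)) (At : hom l (mk n)) (pi io : cell l (mk n)) : Prop :=
  is2 be (comp1 (mt n) A) A /\
  vcomp be (hcomp (id2 (mt n)) be) = vcomp be (hcomp (mmu n) (id2 A)) /\
  is2 pi A At /\ is2 io At A /\
  vcomp io pi = vcomp be (hcomp (meta n) (id2 A)) /\ vcomp pi io = id2 At.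

Section SplitWeakAlgebra.
Context {K : TwoCat} {HK : strict_2cat K}.
Variable n : monad K.
Hypothesis Hn : is_monad n.
Variables (l : K) (A At : hom l (mk n)) (be pi io : cell l (mk n)).
Hypothesis HS : split_weak_alg n l A be At pi io.

Lemma idem_act : vcomp (vcomp be (hcomp (meta n) (id2 A))) be = be.
Proof.
  destruct HS as (Hbe & Hba & _). destruct Hn as (Hmu & Heta & Hass & Hu1 & Hu2).
  cnorm. exchange 1. rw_at 0 2 Hba. whisker_r A in Hu1. rw_at 1 2 Hu1. reflexivity.
Qed.

Lemma act_idem : vcomp be (hcomp (id2 (mt n)) (vcomp be (hcomp (meta n) (id2 A)))) = be.
Proof.
  destruct HS as (Hbe & Hba & _). destruct Hn as (Hmu & Heta & Hass & Hu1 & Hu2).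
  cnorm. rw_at 0 2 Hba. whisker_r A in Hu2. rw_at 1 2 Hu2. reflexivity.
Qed.

Lemma split_iota_mor :
  vcomp io (vcomp pi (vcomp be (hcomp (id2 (mt n)) io))) = vcomp be (hcomp (id2 (mt n)) io).
Proof.
  pose proof idem_act as H2.
  destruct HS as (Hbe & Hba & Hpi & Hio & Hip & Hpi_io).
  destruct Hn as (Hmu & Heta & Hass & Hu1 & Hu2).
  cnorm in H2. cnorm in Hip. cnorm. rw_at 0 2 Hip. rw_at 0 3 H2. reflexivity.
Qed.

Lemma split_pi_mor :
  vcomp (vcomp pi (vcomp be (hcomp (id2 (mt n)) io))) (hcomp (id2 (mt n)) pi) = vcomp pi be.
Proof.
  pose proof act_idem as H1.
  destruct HS as (Hbe & Hba & Hpi & Hio & Hip & Hpi_io).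
  destruct Hn as (Hmu & Heta & Hass & Hu1 & Hu2).
  cnorm in H1. cnorm in Hip. cnorm. pose proof Hip as H3. whisker_l (mt n) in H3.
  rw_at 2 2 H3. rw_at 1 3 H1. reflexivity.
Qed.

Lemma split_weak_alg_whisker l' (X : hom l' l) :
  split_weak_alg n l' (comp1 A X) (hcomp be (id2 X)) (comp1 At X) (hcomp pi (id2 X))
    (hcomp io (id2 X)).
Proof.
  destruct HS as (H1 & H2 & H3 & H4 & H5 & H6). destruct Hn as (Hmu & Heta & _).
  split; [is2_solve|]. split; [|split; [is2_solve|split; [is2_solve|split]]].
  - whisker_r X in H2. cnorm. exact H2.
  - whisker_r X in H5. cnorm. exact H5.
  - whisker_r X in H6. cnorm. exact H6.
Qed.
End SplitWeakAlgebra.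

Section SplitWeakMorphism.
Context {K : TwoCat} {HK : strict_2cat K}.
Variable n : monad K.
Hypothesis Hn : is_monad n.
Variables (l : K) (A At : hom l (mk n)) (be pi io : cell l (mk n)).
Variables (B Bt : hom l (mk n)) (beB piB ioB : cell l (mk n)).
Variable g : cell l (mk n).
Hypothesis HSA : split_weak_alg n l A be At pi io.
Hypothesis HSB : split_weak_alg n l B beB Bt piB ioB.
Hypothesis Hg : is2 g A B.
Hypothesis Hgm : vcomp beB (hcomp (id2 (mt n)) g) = vcomp g be.

Lemma weak_mor_idem :
  vcomp g (vcomp be (hcomp (meta n) (id2 A))) = vcomp (vcomp beB (hcomp (meta n) (id2 B))) g.
Proof.
  destruct HSA as (Hbe & _). destruct HSB as (HbeB & _).
  pose proof Hgm as Hgm'. destruct Hn as (Hmu & Heta & Hass & Hu1 & Hu2).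
  cnorm in Hgm'. cnorm. rw_at 0 2 (eq_sym Hgm'). exchange' 1. reflexivity.
Qed.

Lemma split_mor : is_alg_mor n At (vcomp pi (vcomp be (hcomp (id2 (mt n)) io)))
   Bt (vcomp piB (vcomp beB (hcomp (id2 (mt n)) ioB))) (vcomp piB (vcomp g io)).
Proof.
  pose proof (act_idem n Hn l B Bt beB piB ioB HSB) as H1B.
  pose proof (idem_act n Hn l A At be pi io HSA) as H2.
  destruct HSA as (Hbe & Hba & Hpi & Hio & Hip & Hpi_io).
  destruct HSB as (HbeB & HbaB & HpiB & HioB & HipB & Hpi_ioB).
  pose proof Hgm as Hgm'. destruct Hn as (Hmu & Heta & Hass & Hu1 & Hu2).
  cnorm in H1B. cnorm in H2. cnorm in Hip. cnorm in HipB. cnorm in Hgm'.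
  split; [split; is2_solve|].
  cnorm. pose proof HipB as H3. whisker_l (mt n) in H3.
  rw_at 2 2 H3. rw_at 1 3 H1B. rw_at 1 2 Hgm'. rw_at_rhs 2 2 Hip. rw_at_rhs 2 3 H2. reflexivity.
Qed.
End SplitWeakMorphism.

Section InvertibleCells.
Context {K : TwoCat} {HK : strict_2cat K}.

Lemma retract_hcomp (a b c : K) (X Y : hom a b) (om : cell a b) (A At : hom b c)
    (pi io : cell b c) :
  is2 om X Y -> is2 pi A At -> is2 io At A -> vcomp pi io = id2 At ->
  hcomp (id2 At) om = vcomp (hcomp pi (id2 Y)) (vcomp (hcomp (id2 A) om) (hcomp io (id2 X))).
Proof.
  intros Ho Hp Hi E. symmetry. cnorm. exchange' 1. whisker_r Y in E. rw_at 0 2 E. reflexivity.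
Qed.
Lemma is_iso2_vcomp (a b : K) (x y : cell a b) f g h :
  is_iso2 x f g -> is_iso2 y g h -> is_iso2 (vcomp y x) f h.
Proof.
  intros [Hx (x' & Hx' & E1 & E2)] [Hy (y' & Hy' & E3 & E4)].
  split; [is2_solve|]. exists (vcomp x' y'). split; [is2_solve|]. split.
  - cnorm. rw_at 1 2 E3. rw_at 0 2 E1. reflexivity.
  - cnorm. rw_at 1 2 E2. rw_at 0 2 E4. reflexivity.
Qed.

Lemma is_iso2_hcomp (a b c : K) (x : cell b c) (y : cell a b) f g f' g' :
  is_iso2 x f g -> is_iso2 y f' g' -> is_iso2 (hcomp x y) (comp1 f f') (comp1 g g').
Proof.
  intros [Hx (x' & Hx' & E1 & E2)] [Hy (y' & Hy' & E3 & E4)].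
  split; [is2_solve|]. exists (hcomp x' y'). split; [is2_solve|]. split.
  - rewrite vcomp_hcomp by composable. rewrite E1, E3. apply hcomp_id2s.
  - rewrite vcomp_hcomp by composable. rewrite E2, E4. apply hcomp_id2s.
Qed.
End InvertibleCells.

Section EMwCells.
Context {K : TwoCat} {HK : strict_2cat K}.

Lemma EMw1_id1 (m : monad K) : is_monad m -> is_EMw1 m m (id1 (mk m)) (id1w_psi m).
Proof.
  intros (Hmu & Heta & Hass & Hu1 & Hu2). unfold id1w_psi. split.
  - is2_solve.
  - cnorm. reflexivity.
Qed.

Lemma EMw1_comp1 (m1 m2 m3 : monad K) V psi V' psi' :
  is_monad m1 -> is_monad m2 -> is_monad m3 ->
  is_EMw1 m1 m2 V psi -> is_EMw1 m2 m3 V' psi' ->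
  is_EMw1 m1 m3 (comp1 V' V) (comp1w_psi V' psi' V psi).
Proof.
  intros (Hmu1 & Heta1 & Hass1 & Hu11 & Hu21) (Hmu2 & Heta2 & Hass2 & Hu12 & Hu22)
         (Hmu3 & Heta3 & Hass3 & Hu13 & Hu23) [Hp Ep] [Hp' Ep'].
  unfold comp1w_psi. split.
  - is2_solve.
  - cnorm. exchange 2. whisker_l V' in Ep. rw_at 0 3 Ep. whisker_r V in Ep'. rw_at 1 3 Ep'.
    reflexivity.
Qed.

Lemma EMw1_unit (m m' : monad K) W phi :
  is_monad m -> is_monad m' -> is_EMw1 m m' W phi ->
  vcomp (hcomp (id2 W) (mmu m)) (vcomp (hcomp phi (id2 (mt m)))
    (vcomp (hcomp (meta m') (id2 (comp1 W (mt m)))) phi)) = phi.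
Proof.
  intros (Hmu1 & Heta1 & Hass1 & Hu11 & Hu21) (Hmu2 & Heta2 & Hass2 & Hu12 & Hu22) [Hp Ep].
  cnorm. exchange 2. rw_at 0 3 Ep. whisker_r W in Hu12. rw_at 1 2 Hu12. reflexivity.
Qed.

Lemma EMw2_id2w (m m' : monad K) W phi :
  is_monad m -> is_monad m' -> is_EMw1 m m' W phi ->
  is_EMw2 m m' W phi W phi (id2w m' W phi).
Proof.
  intros Hm Hm' HW. pose proof (EMw1_unit m m' W phi Hm Hm' HW) as U.
  destruct Hm as (Hmu1 & Heta1 & Hass1 & Hu11 & Hu21).
  destruct Hm' as (Hmu2 & Heta2 & Hass2 & Hu12 & Hu22). destruct HW as [Hp Ep].
  unfold id2w. cnorm in U. split; [|split].
  - is2_solve.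
  - cnorm. rw_at 0 4 U. rw_at_rhs 0 3 Ep. whisker_r W in Hu22. rw_at_rhs 1 2 Hu22. reflexivity.
  - cnorm. rw_at_rhs 0 4 U. reflexivity.
Qed.

Lemma EMw2_vcomp2w (m m' : monad K) V psi W phi U chi rho tau :
  is_monad m -> is_monad m' -> is_EMw1 m m' V psi -> is_EMw1 m m' W phi -> is_EMw1 m m' U chi ->
  is_EMw2 m m' V psi W phi rho -> is_EMw2 m m' W phi U chi tau ->
  is_EMw2 m m' V psi U chi (vcomp2w m U tau rho).
Proof.
  intros (Hmu1 & Heta1 & Hass1 & Hu11 & Hu21) (Hmu2 & Heta2 & Hass2 & Hu12 & Hu22)
    [Hp Ep] [Hf Ef] [Hc Ec] (Hr & Er1 & Er2) (Ht & Et1 & Et2).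
  unfold vcomp2w. split; [|split].
  - is2_solve.
  - cnorm. pose proof Hass1 as A1. whisker_l U in A1. rw_at 0 2 A1. exchange' 1. cnorm in Er1.
    rw_at 2 3 Er1.
    exchange 1. rw_at 0 2 (eq_sym A1). cnorm in Et1. whisker_r (mt m) in Et1. rw_at 1 3 Et1.
    symmetry. exchange 1. rw_at 0 2 (eq_sym A1). reflexivity.
  - cnorm. pose proof Hass1 as A1. whisker_l U in A1. symmetry. exchange 2. exchange 1.
    rw_at 0 2 (eq_sym A1).
    cnorm in Et2. whisker_r (mt m) in Et2. rw_at 1 4 (eq_sym Et2). reflexivity.
Qed.

Lemma EMw2_mu_compat (m m' : monad K) V psi W phi rho :
  is_monad m -> is_monad m' -> is_EMw1 m m' V psi -> is_EMw1 m m' W phi ->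
  is_EMw2 m m' V psi W phi rho ->
  vcomp (hcomp (id2 W) (mmu m)) (vcomp (hcomp phi (id2 (mt m)))
    (hcomp (id2 (mt m')) (vcomp (hcomp (id2 W) (mmu m)) (vcomp (hcomp rho (id2 (mt m))) psi))))
  = vcomp (hcomp (id2 W) (mmu m))
      (vcomp (hcomp rho (id2 (mt m))) (vcomp psi (hcomp (mmu m') (id2 V)))).
Proof.
  intros (Hmu1 & Heta1 & Hass1 & Hu11 & Hu21) (Hmu2 & Heta2 & Hass2 & Hu12 & Hu22)
    [Hp Ep] [Hf Ef] (Hr & Er1 & Er2).
  pose proof Hass1 as A1. whisker_l W in A1.
  cnorm in Er1. pose proof Er1 as Er1'. whisker_l (mt m') in Er1'.
  cnorm. rw_at 2 3 Er1'. exchange 1. rw_at 0 2 (eq_sym A1).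
  symmetry. rw_at 0 3 Er1. exchange' 2. whisker_r (mt m) in Ef. rw_at 1 2 (eq_sym Ef). reflexivity.
Qed.

Lemma EMw2_hcomp2w (m1 m2 m3 : monad K) V psi W phi rho V' psi' W' phi' rho' :
  is_monad m1 -> is_monad m2 -> is_monad m3 ->
  is_EMw1 m1 m2 V psi -> is_EMw1 m1 m2 W phi -> is_EMw1 m2 m3 V' psi' -> is_EMw1 m2 m3 W' phi' ->
  is_EMw2 m1 m2 V psi W phi rho -> is_EMw2 m2 m3 V' psi' W' phi' rho' ->
  is_EMw2 m1 m3 (comp1 V' V) (comp1w_psi V' psi' V psi) (comp1 W' W) (comp1w_psi W' phi' W phi)
    (hcomp2w m1 W' W V psi rho' rho).
Proof.
  intros Hm1 Hm2 Hm3 HV HW HV' HW' Hr Hr'.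
  pose proof (EMw2_mu_compat m1 m2 V psi W phi rho Hm1 Hm2 HV HW Hr) as Q.
  destruct Hm1 as (Hmu1 & Heta1 & Hass1 & Hu11 & Hu21).
  destruct Hm2 as (Hmu2 & Heta2 & Hass2 & Hu12 & Hu22).
  destruct Hm3 as (Hmu3 & Heta3 & Hass3 & Hu13 & Hu23).
  destruct HV as [Hp Ep]. destruct HW as [Hf Ef]. destruct HV' as [Hp' Ep'].
  destruct HW' as [Hf' Ef'].
  destruct Hr as (Hr & Er1 & Er2). destruct Hr' as (Hr' & Er1' & Er2').
  cnorm in Q. whisker_l W' in Q.
  unfold hcomp2w, comp1w_psi. split; [|split].
  - is2_solve.
  - cnorm. pose proof Hass1 as A1. whisker_l (comp1 W' W) in A1. rw_at 0 2 A1. exchange' 1.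
    exchange 4.
    whisker_l W' in Ep. rw_at 2 3 Ep. cnorm in Er1'. whisker_r V in Er1'. rw_at 3 3 Er1'.
    rw_at 0 4 (eq_sym Q).
    symmetry. exchange 2. exchange 3. exchange 4. reflexivity.
  - cnorm. symmetry. exchange 3. exchange 4. exchange 5. exchange 2. exchange 3. exchange 4.
    rw_at 0 5 Q.
    cnorm in Er2'. whisker_r V in Er2'. rw_at 3 4 (eq_sym Er2'). reflexivity.
Qed.

Lemma comp1w_psi_assoc m1 m2 m3 (m4 : monad K) V psi V' psi' (V'' : hom (mk m3) (mk m4)) psi'' :
  is2 psi (comp1 (mt m2) V) (comp1 V (mt m1)) -> is2 psi' (comp1 (mt m3) V') (comp1 V' (mt m2)) ->
  is2 psi'' (comp1 (mt m4) V'') (comp1 V'' (mt m3)) ->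
  comp1w_psi (comp1 V'' V') (comp1w_psi V'' psi'' V' psi') V psi =
  comp1w_psi V'' psi'' (comp1 V' V) (comp1w_psi V' psi' V psi).
Proof. intros H1 H2 H3. unfold comp1w_psi. cnorm. reflexivity. Qed.

Lemma comp1w_psi_id1r (m m' : monad K) V psi : is2 psi (comp1 (mt m') V) (comp1 V (mt m)) ->
  comp1w_psi V psi (id1 (mk m)) (id1w_psi m) = psi.
Proof. intros H. unfold comp1w_psi, id1w_psi. cnorm. reflexivity. Qed.

Lemma comp1w_psi_id1l (m m' : monad K) V psi : is2 psi (comp1 (mt m') V) (comp1 V (mt m)) ->
  comp1w_psi (id1 (mk m')) (id1w_psi m') V psi = psi.
Proof. intros H. unfold comp1w_psi, id1w_psi. cnorm. reflexivity. Qed.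

End EMwCells.

Definition Jf' {K : TwoCat} (EMc : EMchoice K) (m : monad K) : hom (mk m) (JO EMc m) :=
  Jf (EMc m).

Section EMAdjunction.
Context {K : TwoCat} {HK : strict_2cat K} {EMc : EMchoice K}.
Hypothesis HEM : EMchoice_ok EMc.

Lemma EM_adjunction (m : monad K) : is_monad m ->
  mt m = comp1 (Jv' EMc m) (Jf' EMc m) /\
  is2 (Jeps' EMc m) (comp1 (Jf' EMc m) (Jv' EMc m)) (id1 (JO EMc m)) /\
  mmu m = hcomp (id2 (Jv' EMc m)) (hcomp (Jeps' EMc m) (id2 (Jf' EMc m))) /\
  vcomp (hcomp (id2 (Jv' EMc m)) (Jeps' EMc m)) (hcomp (meta m) (id2 (Jv' EMc m))) =
    id2 (Jv' EMc m) /\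
  vcomp (hcomp (Jeps' EMc m) (id2 (Jf' EMc m))) (hcomp (id2 (Jf' EMc m)) (meta m)) =
    id2 (Jf' EMc m).
Proof.
  intros Hm. destruct (HEM m Hm) as (E1 & E2 & E3 & E4 & E5 & _ & _).
  split; [exact E1|]. split; [exact E2|]. split; [|split; [exact E4|exact E5]].
  rewrite E3. apply whisker_l_r.
Qed.

End EMAdjunction.

Ltac unpack_monad m Hm :=
  let H := fresh in
  match goal with HEM : EMchoice_ok _ |- _ => pose proof (EM_adjunction HEM m Hm) as H end;
  let Et := fresh "Et" in let He := fresh "He" in let Emu := fresh "Emu" in
  let T1 := fresh "T1" in let T2 := fresh "T2" in
  destruct H as (Et & He & Emu & T1 & T2); apply hom_ruleI in Et; apply hom_ruleI in Emu;
  let H' := fresh in pose proof Hm as H';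
  let Hmu := fresh "Hmu" in let Heta := fresh "Heta" in let Hass := fresh "Hass" in
  let Hu1 := fresh "Hu" in let Hu2 := fresh "Hu" in
  destruct H' as (Hmu & Heta & Hass & Hu1 & Hu2).

(* [hat EMc m W x] is [W v eps * x v]: for a 1-cell (V, psi) of EM^w it is the weak
   t'-action on [V v], for a 2-cell rho the cell [V v => W v] inducing J^w(rho). *)
Definition hat {K : TwoCat} (EMc : EMchoice K) (m : monad K) {k' : K}
    (W : hom (mk m) k') (x : cell (mk m) k') : cell (JO EMc m) k' :=
  vcomp (hcomp (id2 (comp1 W (Jv' EMc m))) (Jeps' EMc m)) (hcomp x (id2 (Jv' EMc m))).

Section EilenbergMoore.
Context {K : TwoCat} {HK : strict_2cat K} {EMc : EMchoice K}.
Hypothesis HEM : EMchoice_ok EMc.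

Lemma Jv_whisker_alg_mor (m : monad K) (Hm : is_monad m) (l : K) (X Y : hom l (JO EMc m)) om :
  is2 om X Y ->
  vcomp (hcomp (id2 (Jv' EMc m)) (hcomp (Jeps' EMc m) (id2 Y)))
        (hcomp (id2 (mt m)) (hcomp (id2 (Jv' EMc m)) om)) =
  vcomp (hcomp (id2 (Jv' EMc m)) om) (hcomp (id2 (Jv' EMc m)) (hcomp (Jeps' EMc m) (id2 X))).
Proof.
  intros Ho. destruct (EM_adjunction HEM m Hm) as (Et & He & Emu & T1 & T2).
  assert (hom_rule (mt m = comp1 (Jv' EMc m) (Jf' EMc m))) by exact Et.
  cnorm. exchange 0. reflexivity.
Qed.

Lemma Jv_faithful (m : monad K) (Hm : is_monad m) (l : K) (X Y : hom l (JO EMc m)) om1 om2 :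
  is2 om1 X Y -> is2 om2 X Y ->
  hcomp (id2 (Jv' EMc m)) om1 = hcomp (id2 (Jv' EMc m)) om2 -> om1 = om2.
Proof.
  intros H1 H2 E.
  destruct (HEM m Hm) as (E1 & E2 & E3 & E4 & E5 & _ & E7).
  assert (M : forall om, is2 om X Y -> is_alg_mor m (comp1 (Jv (EMc m)) X)
      (hcomp (hcomp (id2 (Jv (EMc m))) (Jeps (EMc m))) (id2 X))
      (comp1 (Jv (EMc m)) Y) (hcomp (hcomp (id2 (Jv (EMc m))) (Jeps (EMc m))) (id2 Y))
      (hcomp (id2 (Jv (EMc m))) om)).
  { intros om Ho. split.
    - change (Jv (EMc m)) with (Jv' EMc m). is2_solve.
    - pose proof (Jv_whisker_alg_mor m Hm l X Y om Ho) as V. rewrite !whisker_l_r. exact V. }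
  destruct (E7 l X Y _ (M om1 H1)) as (om & [Ho Eo] & U).
  rewrite (U om1 (conj H1 eq_refl)).
  symmetry. apply U. split; [exact H2|]. symmetry. exact E.
Qed.

Lemma Jv_lift (m : monad K) (Hm : is_monad m) (l : K) (X Y : hom l (JO EMc m)) A B al be rho :
  is_alg_mor m A al B be rho ->
  A = comp1 (Jv' EMc m) X -> B = comp1 (Jv' EMc m) Y ->
  al = hcomp (id2 (Jv' EMc m)) (hcomp (Jeps' EMc m) (id2 X)) ->
  be = hcomp (id2 (Jv' EMc m)) (hcomp (Jeps' EMc m) (id2 Y)) ->
  exists om, is2 om X Y /\ hcomp (id2 (Jv' EMc m)) om = rho.
Proof.
  intros M -> -> -> ->.
  destruct (HEM m Hm) as (E1 & E2 & E3 & E4 & E5 & _ & E7).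
  destruct (E7 l X Y rho) as (om & [Ho Eo] & _).
  - rewrite !whisker_l_r. exact M.
  - exists om. split; assumption.
Qed.

(* The 2-cell [om : X => Y] with [v om = c]; it is unique by [Jv_faithful] and exists in
   the cases of interest by [Jv_lift]. *)
Definition lift_cell (m : monad K) {l : K} (X Y : hom l (JO EMc m)) (c : cell l (mk m)) :
    cell l (JO EMc m) :=
  epsilon (inhabits (id2 X)) (fun om => is2 om X Y /\ hcomp (id2 (Jv' EMc m)) om = c).

Lemma lift_cell_spec (m : monad K) (l : K) (X Y : hom l (JO EMc m)) (c : cell l (mk m)) :
  (exists om, is2 om X Y /\ hcomp (id2 (Jv' EMc m)) om = c) ->
  is2 (lift_cell m X Y c) X Y /\ hcomp (id2 (Jv' EMc m)) (lift_cell m X Y c) = c.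
Proof. exact (epsilon_spec _ _). Qed.


Lemma hat_weak_alg m m' V psi : is_monad m -> is_monad m' -> is_EMw1 m m' V psi ->
  is2 (hat EMc m V psi) (comp1 (mt m') (comp1 V (Jv' EMc m))) (comp1 V (Jv' EMc m)) /\
  vcomp (hat EMc m V psi) (hcomp (id2 (mt m')) (hat EMc m V psi)) =
  vcomp (hat EMc m V psi) (hcomp (mmu m') (id2 (comp1 V (Jv' EMc m)))).
Proof.
  intros Hm Hm' [Hp Ep]. unpack_monad m Hm. unpack_monad m' Hm'. unfold hat. split.
  - is2_solve.
  - cnorm. exchange 1. exchange 0. cnorm in Ep. whisker_r (Jv' EMc m) in Ep. rw_at 1 3 Ep.
    reflexivity.
Qed.

Lemma hat_weak_mor m m' V psi W phi rho : is_monad m -> is_monad m' -> is_EMw1 m m' V psi ->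
  is_EMw1 m m' W phi -> is_EMw2 m m' V psi W phi rho ->
  vcomp (hat EMc m W phi) (hcomp (id2 (mt m')) (hat EMc m W rho)) =
    vcomp (hat EMc m W rho) (hat EMc m V psi).
Proof.
  intros Hm Hm' [Hp Ep] [Hf Ef] (Hr & Er1 & Er2). unpack_monad m Hm. unpack_monad m' Hm'.
  unfold hat.
  symmetry. cnorm. exchange 1. exchange 0. cnorm in Er1. whisker_r (Jv' EMc m) in Er1.
  rw_at 1 3 Er1. exchange' 0. exchange' 1.
  reflexivity.
Qed.

Lemma hat_idem m m' V psi W phi rho : is_monad m -> is_monad m' -> is_EMw1 m m' V psi ->
  is_EMw1 m m' W phi -> is_EMw2 m m' V psi W phi rho ->
  vcomp (vcomp (hat EMc m W phi) (hcomp (meta m') (id2 (comp1 W (Jv' EMc m))))) (hat EMc m W rho)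
  = hat EMc m W rho.
Proof.
  intros Hm Hm' [Hp Ep] [Hf Ef] (Hr & Er1 & Er2). unpack_monad m Hm. unpack_monad m' Hm'.
  unfold hat.
  cnorm. exchange 2. exchange 1. exchange 0. cnorm in Er2. whisker_r (Jv' EMc m) in Er2.
  rw_at 1 4 (eq_sym Er2). reflexivity.
Qed.

Lemma hat_vcomp2w m (m' : monad K) V W U (rho tau : cell (mk m) (mk m')) : is_monad m ->
  is2 rho V (comp1 W (mt m)) -> is2 tau W (comp1 U (mt m)) ->
  hat EMc m U (vcomp2w m U tau rho) = vcomp (hat EMc m U tau) (hat EMc m W rho).
Proof.
  intros Hm Hr Ht. unpack_monad m Hm. unfold hat, vcomp2w. cnorm. symmetry. exchange 1. exchange 0.
  reflexivity.
Qed.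

Lemma hat_hcomp2w m1 m2 (m3 : monad K) V psi W (V' W' : hom (mk m2) (mk m3)) rho rho' :
  is_monad m1 -> is_monad m2 ->
  is2 psi (comp1 (mt m2) V) (comp1 V (mt m1)) ->
  is2 rho V (comp1 W (mt m1)) -> is2 rho' V' (comp1 W' (mt m2)) ->
  hat EMc m1 (comp1 W' W) (hcomp2w m1 W' W V psi rho' rho) =
  vcomp (hcomp (id2 W') (hat EMc m1 W rho)) (vcomp (hcomp (id2 W') (hat EMc m1 V psi))
     (hcomp rho' (id2 (comp1 V (Jv' EMc m1))))).
Proof.
  intros Hm1 Hm2 Hp Hr Hr'. unpack_monad m1 Hm1. unpack_monad m2 Hm2. unfold hat, hcomp2w. cnorm.
  symmetry.
  exchange 1. exchange 0. reflexivity.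
Qed.

Lemma hat_id1w m : is_monad m ->
  hat EMc m (id1 (mk m)) (id1w_psi m) = hcomp (id2 (Jv' EMc m)) (Jeps' EMc m).
Proof. intros Hm. unpack_monad m Hm. unfold hat, id1w_psi. cnorm. reflexivity. Qed.

Lemma hat_comp1w m1 m2 (m3 : monad K) V psi (V' : hom (mk m2) (mk m3)) psi' :
  is_monad m1 -> is2 psi (comp1 (mt m2) V) (comp1 V (mt m1)) ->
  is2 psi' (comp1 (mt m3) V') (comp1 V' (mt m2)) ->
  hat EMc m1 (comp1 V' V) (comp1w_psi V' psi' V psi) =
  vcomp (hcomp (id2 V') (hat EMc m1 V psi)) (hcomp psi' (id2 (comp1 V (Jv' EMc m1)))).
Proof. intros Hm1 Hp Hp'. unpack_monad m1 Hm1. unfold hat, comp1w_psi. cnorm. reflexivity. Qed.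

Lemma EM_split_weak_alg m : is_monad m ->
  split_weak_alg m (JO EMc m) (Jv' EMc m) (hcomp (id2 (Jv' EMc m)) (Jeps' EMc m)) (Jv' EMc m)
      (id2 (Jv' EMc m)) (id2 (Jv' EMc m)).
Proof.
  intros Hm. unpack_monad m Hm. split; [is2_solve|].
  split; [|split; [is2_solve|split; [is2_solve|split]]].
  - cnorm. exchange 0. reflexivity.
  - cnorm in T1. cnorm. rewrite T1. reflexivity.
  - cnorm. reflexivity.
Qed.

Lemma Jw_split_weak_alg (spl : split_choice EMc) (Hspl : split_choice_ok EMc spl) m m' V psi :
  is_monad m -> is_monad m' -> is_EMw1 m m' V psi ->
  split_weak_alg m' (JO EMc m) (comp1 V (Jv' EMc m)) (hat EMc m V psi)
    (sobj (spl m m' V psi)) (spi (spl m m' V psi)) (siota (spl m m' V psi)).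
Proof.
  intros Hm Hm' HV. destruct (hat_weak_alg m m' V psi Hm Hm' HV) as [W1 W2].
  destruct (Hspl m m' V psi Hm Hm' HV) as (S1 & S2 & S3 & S4).
  pose proof HV as [Hp Ep]. unpack_monad m Hm. unpack_monad m' Hm'.
  split; [exact W1|]. split; [exact W2|]. split; [exact S1|]. split; [exact S2|].
  split; [|exact S4]. rewrite S3. unfold idemw, hat. cnorm. reflexivity.
Qed.

End EilenbergMoore.

Tactic Notation "unpack_Jw" constr(Hspl) constr(HJ) constr(m) constr(m') constr(V) constr(psi)
   constr(Hm) constr(Hm') constr(HV) "as" ident(W) ident(Ev) ident(Ea) :=
  match goal with HEM : EMchoice_ok _ |- _ =>
    pose proof (Jw_split_weak_alg HEM _ Hspl m m' V psi Hm Hm' HV) as W end;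
  pose proof (proj1 HJ m m' V psi Hm Hm' HV) as Ev; destruct Ev as [Ev Ea];
  apply eq_sym in Ev; apply hom_ruleI in Ev;
  let W' := fresh in pose proof W as W';
  let Hpi := fresh "Hpi" in let Hio := fresh "Hio" in
  destruct W' as (_ & _ & Hpi & Hio & _ & _);
  let Hps := fresh "Hps" in pose proof (proj1 HV) as Hps.

Section JwPseudofunctor.
Context {K : TwoCat} {HK : strict_2cat K} {EMc : EMchoice K}.
Hypothesis HEM : EMchoice_ok EMc.
Variable spl : split_choice EMc.
Hypothesis Hspl : split_choice_ok EMc spl.
Variables (F1 : J1type EMc) (F2 : J2type EMc).
Hypothesis HJ : is_Jw EMc spl F1 F2.

Tactic Notation "unpack_Jw3" constr(m1) constr(m2) constr(m3) constr(V) constr(psi)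
  constr(V') constr(psi') constr(Hm1) constr(Hm2) constr(Hm3) constr(HV) constr(HV')
  "as" ident(HVV) ident(W) ident(W') ident(W'')
  ident(WX) ident(Ev) ident(Ev') ident(Ev'') ident(Ea) ident(Ea') ident(Ea'') :=
  pose proof (EMw1_comp1 m1 m2 m3 V psi V' psi' Hm1 Hm2 Hm3 HV HV') as HVV;
  unpack_Jw Hspl HJ m1 m2 V psi Hm1 Hm2 HV as W Ev Ea;
  unpack_Jw Hspl HJ m2 m3 V' psi' Hm2 Hm3 HV' as W' Ev' Ea';
  unpack_Jw Hspl HJ m1 m3 (comp1 V' V) (comp1w_psi V' psi' V psi) Hm1 Hm3 HVV as W'' Ev'' Ea'';
  pose proof (split_weak_alg_whisker m3 Hm3 _ _ _ _ _ _ W' _ (F1 m1 m2 V psi)) as WX;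
  let Hp := fresh "Hp" in let Ep := fresh "Ep" in pose proof HV as [Hp Ep];
  let Hp := fresh "Hp" in let Ep := fresh "Ep" in pose proof HV' as [Hp Ep];
  unpack_monad m1 Hm1; unpack_monad m2 Hm2; unpack_monad m3 Hm3.

Definition compositor_cell m1 m2 m3 V' psi' V psi : cell (JO EMc m1) (mk m3) :=
  vcomp (spi (spl m1 m3 (comp1 V' V) (comp1w_psi V' psi' V psi)))
    (vcomp (hcomp (id2 V') (siota (spl m1 m2 V psi)))
       (hcomp (siota (spl m2 m3 V' psi')) (id2 (F1 m1 m2 V psi)))).

Lemma compositor_cell_mor m1 m2 m3 V psi V' psi' :
  is_monad m1 -> is_monad m2 -> is_monad m3 -> is_EMw1 m1 m2 V psi -> is_EMw1 m2 m3 V' psi' ->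
  vcomp (hat EMc m1 (comp1 V' V) (comp1w_psi V' psi' V psi))
        (hcomp (id2 (mt m3)) (hcomp (id2 V') (siota (spl m1 m2 V psi)))) =
  vcomp (hcomp (id2 V') (siota (spl m1 m2 V psi)))
        (hcomp (hat EMc m2 V' psi') (id2 (F1 m1 m2 V psi))).
Proof.
  intros Hm1 Hm2 Hm3 HV HV'.
  pose proof (split_iota_mor m2 Hm2 _ _ _ _ _ _
                (Jw_split_weak_alg HEM spl Hspl m1 m2 V psi Hm1 Hm2 HV)) as IOM.
  unpack_Jw3 m1 m2 m3 V psi V' psi' Hm1 Hm2 Hm3 HV HV' as HVV W W' W'' WX Ev Ev' Ev'' Ea Ea' Ea''.
  unfold hat, comp1w_psi. cnorm. exchange 2. unfold hat in IOM. cnorm in IOM. whisker_l V' in IOM.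
  rw_at 0 3 (eq_sym IOM). cnorm in Ea. whisker_l V' in Ea. rw_at 1 4 (eq_sym Ea). reflexivity.
Qed.

Lemma compositor_inv_cell_mor m1 m2 m3 V psi V' psi' :
  is_monad m1 -> is_monad m2 -> is_monad m3 -> is_EMw1 m1 m2 V psi -> is_EMw1 m2 m3 V' psi' ->
  vcomp (hcomp (hat EMc m2 V' psi') (id2 (F1 m1 m2 V psi)))
        (hcomp (id2 (mt m3)) (hcomp (id2 V') (spi (spl m1 m2 V psi)))) =
  vcomp (hcomp (id2 V') (spi (spl m1 m2 V psi)))
        (hat EMc m1 (comp1 V' V) (comp1w_psi V' psi' V psi)).
Proof.
  intros Hm1 Hm2 Hm3 HV HV'.
  pose proof (split_pi_mor m2 Hm2 _ _ _ _ _ _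
                (Jw_split_weak_alg HEM spl Hspl m1 m2 V psi Hm1 Hm2 HV)) as PM.
  unpack_Jw3 m1 m2 m3 V psi V' psi' Hm1 Hm2 Hm3 HV HV' as HVV W W' W'' WX Ev Ev' Ev'' Ea Ea' Ea''.
  unfold hat, comp1w_psi. cnorm. symmetry. unfold hat in PM. cnorm in PM. whisker_l V' in PM.
  rw_at 0 3 (eq_sym PM). cnorm in Ea. whisker_l V' in Ea. rw_at 0 4 (eq_sym Ea). exchange' 1.
  reflexivity.
Qed.

Lemma compositor_lift m1 m2 m3 V psi V' psi' :
  is_monad m1 -> is_monad m2 -> is_monad m3 -> is_EMw1 m1 m2 V psi -> is_EMw1 m2 m3 V' psi' ->
  exists om, is2 om (comp1 (F1 m2 m3 V' psi') (F1 m1 m2 V psi))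
                 (F1 m1 m3 (comp1 V' V) (comp1w_psi V' psi' V psi)) /\
             hcomp (id2 (Jv' EMc m3)) om = compositor_cell m1 m2 m3 V' psi' V psi.
Proof.
  intros Hm1 Hm2 Hm3 HV HV'.
  pose proof (compositor_cell_mor m1 m2 m3 V psi V' psi' Hm1 Hm2 Hm3 HV HV') as Hgm.
  unpack_Jw3 m1 m2 m3 V psi V' psi' Hm1 Hm2 Hm3 HV HV' as HVV W W' W'' WX Ev Ev' Ev'' Ea Ea' Ea''.
  assert (Hg : is2 (hcomp (id2 V') (siota (spl m1 m2 V psi)))
                 (comp1 (comp1 V' (Jv' EMc m2)) (F1 m1 m2 V psi))
                 (comp1 (comp1 V' V) (Jv' EMc m1))).
  { is2_solve. }
  pose proof (split_mor m3 Hm3 _ _ _ _ _ _ _ _ _ _ _ _ WX W'' Hg Hgm) as M.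
  eapply (Jv_lift HEM m3 Hm3 _ _ _ _ _ _ _ _ M).
  - hom_eq.
  - hom_eq.
  - cnorm in Ea'. whisker_r (F1 m1 m2 V psi) in Ea'. unfold hat. cnorm. rewrite Ea'. reflexivity.
  - cnorm in Ea''. unfold hat. cnorm. rewrite Ea''. reflexivity.
Qed.

Definition compositor_inv_cell m1 m2 m3 V' psi' V psi : cell (JO EMc m1) (mk m3) :=
  vcomp (hcomp (spi (spl m2 m3 V' psi')) (id2 (F1 m1 m2 V psi)))
    (vcomp (hcomp (id2 V') (spi (spl m1 m2 V psi)))
       (siota (spl m1 m3 (comp1 V' V) (comp1w_psi V' psi' V psi)))).

Lemma compositor_inv_lift m1 m2 m3 V psi V' psi' :
  is_monad m1 -> is_monad m2 -> is_monad m3 -> is_EMw1 m1 m2 V psi -> is_EMw1 m2 m3 V' psi' ->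
  exists om, is2 om (F1 m1 m3 (comp1 V' V) (comp1w_psi V' psi' V psi))
                    (comp1 (F1 m2 m3 V' psi') (F1 m1 m2 V psi)) /\
             hcomp (id2 (Jv' EMc m3)) om = compositor_inv_cell m1 m2 m3 V' psi' V psi.
Proof.
  intros Hm1 Hm2 Hm3 HV HV'.
  pose proof (compositor_inv_cell_mor m1 m2 m3 V psi V' psi' Hm1 Hm2 Hm3 HV HV') as Hgm.
  unpack_Jw3 m1 m2 m3 V psi V' psi' Hm1 Hm2 Hm3 HV HV' as HVV W W' W'' WX Ev Ev' Ev'' Ea Ea' Ea''.
  assert (Hg : is2 (hcomp (id2 V') (spi (spl m1 m2 V psi)))
                 (comp1 (comp1 V' V) (Jv' EMc m1))
                 (comp1 (comp1 V' (Jv' EMc m2)) (F1 m1 m2 V psi))).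
  { is2_solve. }
  pose proof (split_mor m3 Hm3 _ _ _ _ _ _ _ _ _ _ _ _ W'' WX Hg Hgm) as M.
  eapply (Jv_lift HEM m3 Hm3 _ _ _ _ _ _ _ _ M).
  - hom_eq.
  - hom_eq.
  - cnorm in Ea''. unfold hat. cnorm. rewrite Ea''. reflexivity.
  - cnorm in Ea'. whisker_r (F1 m1 m2 V psi) in Ea'. unfold hat. cnorm. rewrite Ea'. reflexivity.
Qed.

Lemma unitor_lift m : is_monad m ->
  exists om, is2 om (id1 (JO EMc m)) (F1 m m (id1 (mk m)) (id1w_psi m)) /\
    hcomp (id2 (Jv' EMc m)) om = spi (spl m m (id1 (mk m)) (id1w_psi m)).
Proof.
  intros Hm. pose proof (EMw1_id1 m Hm) as HV0. pose proof (EM_split_weak_alg HEM m Hm) as WT.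
  unpack_Jw Hspl HJ m m (id1 (mk m)) (id1w_psi m) Hm Hm HV0 as W0 Ev0 Ea0. unpack_monad m Hm.
  assert (Hg : is2 (id2 (Jv' EMc m)) (Jv' EMc m) (comp1 (id1 (mk m)) (Jv' EMc m))) by is2_solve.
  assert (Hgm : vcomp (hat EMc m (id1 (mk m)) (id1w_psi m)) (hcomp (id2 (mt m)) (id2 (Jv' EMc m)))
                = vcomp (id2 (Jv' EMc m)) (hcomp (id2 (Jv' EMc m)) (Jeps' EMc m))).
  { unfold hat, id1w_psi. cnorm. reflexivity. }
  pose proof (split_mor m Hm _ _ _ _ _ _ _ _ _ _ _ _ WT W0 Hg Hgm) as M.
  pose proof (Jv_lift HEM m Hm _ (id1 (JO EMc m)) (F1 m m (id1 (mk m)) (id1w_psi m))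
                _ _ _ _ _ M) as Ex.
  destruct Ex as (om & Ho & Eo).
  - hom_eq.
  - hom_eq.
  - cnorm. reflexivity.
  - cnorm in Ea0; unfold hat; cnorm; rewrite Ea0; reflexivity.
  - exists om. split; [exact Ho|]. rewrite Eo. cnorm. reflexivity.
Qed.

Lemma unitor_inv_lift m : is_monad m ->
  exists om, is2 om (F1 m m (id1 (mk m)) (id1w_psi m)) (id1 (JO EMc m)) /\
    hcomp (id2 (Jv' EMc m)) om = siota (spl m m (id1 (mk m)) (id1w_psi m)).
Proof.
  intros Hm. pose proof (EMw1_id1 m Hm) as HV0. pose proof (EM_split_weak_alg HEM m Hm) as WT.
  unpack_Jw Hspl HJ m m (id1 (mk m)) (id1w_psi m) Hm Hm HV0 as W0 Ev0 Ea0. unpack_monad m Hm.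
  assert (Hg : is2 (id2 (Jv' EMc m)) (comp1 (id1 (mk m)) (Jv' EMc m)) (Jv' EMc m)) by is2_solve.
  assert (Hgm : vcomp (hcomp (id2 (Jv' EMc m)) (Jeps' EMc m)) (hcomp (id2 (mt m)) (id2 (Jv' EMc m)))
                = vcomp (id2 (Jv' EMc m)) (hat EMc m (id1 (mk m)) (id1w_psi m))).
  { unfold hat, id1w_psi. cnorm. reflexivity. }
  pose proof (split_mor m Hm _ _ _ _ _ _ _ _ _ _ _ _ W0 WT Hg Hgm) as M.
  pose proof (Jv_lift HEM m Hm _ (F1 m m (id1 (mk m)) (id1w_psi m)) (id1 (JO EMc m))
                _ _ _ _ _ M) as Ex.
  destruct Ex as (om & Ho & Eo).
  - hom_eq.
  - hom_eq.
  - cnorm in Ea0; unfold hat; cnorm; rewrite Ea0; reflexivity.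
  - cnorm. reflexivity.
  - exists om. split; [exact Ho|]. rewrite Eo. cnorm. reflexivity.
Qed.

Definition unitor : Utype EMc := fun m =>
  lift_cell m (id1 (JO EMc m)) (F1 m m (id1 (mk m)) (id1w_psi m))
    (spi (spl m m (id1 (mk m)) (id1w_psi m))).

Lemma unitor_spec m : is_monad m ->
  is2 (unitor m) (id1 (JO EMc m)) (F1 m m (id1 (mk m)) (id1w_psi m)) /\
  hcomp (id2 (Jv' EMc m)) (unitor m) = spi (spl m m (id1 (mk m)) (id1w_psi m)).
Proof. intros Hm. exact (lift_cell_spec _ _ _ _ _ (unitor_lift m Hm)). Qed.

Definition compositor : Ctype EMc := fun m1 m2 m3 V' psi' V psi =>
  lift_cell m3 (comp1 (F1 m2 m3 V' psi') (F1 m1 m2 V psi))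
    (F1 m1 m3 (comp1 V' V) (comp1w_psi V' psi' V psi)) (compositor_cell m1 m2 m3 V' psi' V psi).

Lemma compositor_spec m1 m2 m3 V psi V' psi' :
  is_monad m1 -> is_monad m2 -> is_monad m3 -> is_EMw1 m1 m2 V psi -> is_EMw1 m2 m3 V' psi' ->
  is2 (compositor m1 m2 m3 V' psi' V psi) (comp1 (F1 m2 m3 V' psi') (F1 m1 m2 V psi))
         (F1 m1 m3 (comp1 V' V) (comp1w_psi V' psi' V psi)) /\
  hcomp (id2 (Jv' EMc m3)) (compositor m1 m2 m3 V' psi' V psi) =
    compositor_cell m1 m2 m3 V' psi' V psi.
Proof.
  intros Hm1 Hm2 Hm3 HV HV'.
  exact (lift_cell_spec _ _ _ _ _ (compositor_lift m1 m2 m3 V psi V' psi' Hm1 Hm2 Hm3 HV HV')).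
Qed.

Lemma unitor_iso m : is_monad m ->
  is_iso2 (unitor m) (id1 (JO EMc m)) (F1 m m (id1 (mk m)) (id1w_psi m)).
Proof.
  intros Hm. destruct (unitor_spec m Hm) as [Hu Eu].
  destruct (unitor_inv_lift m Hm) as (om' & Ho' & Eo').
  pose proof (EMw1_id1 m Hm) as HV0.
  unpack_Jw Hspl HJ m m (id1 (mk m)) (id1w_psi m) Hm Hm HV0 as W0 Ev0 Ea0.
  destruct W0 as (_ & _ & _ & _ & Hip0 & Hpiio0). rewrite (hat_id1w HEM m Hm) in Hip0.
  unpack_monad m Hm.
  split; [exact Hu|]. exists om'. split; [exact Ho'|]. split.
  - apply (Jv_faithful HEM m Hm _ (id1 (JO EMc m)) (id1 (JO EMc m))); [is2_solve|is2_solve|].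
    cnorm. rewrite Eo', Eu. cnorm in Hip0. rewrite Hip0. cnorm in T1. rewrite T1. reflexivity.
  - apply (Jv_faithful HEM m Hm _ (F1 m m (id1 (mk m)) (id1w_psi m))
             (F1 m m (id1 (mk m)) (id1w_psi m))); [is2_solve|is2_solve|].
    cnorm. rewrite Eu, Eo'. cnorm in Hpiio0. rewrite Hpiio0. reflexivity.
Qed.

Lemma compositor_iso m1 m2 m3 V psi V' psi' :
  is_monad m1 -> is_monad m2 -> is_monad m3 -> is_EMw1 m1 m2 V psi -> is_EMw1 m2 m3 V' psi' ->
  is_iso2 (compositor m1 m2 m3 V' psi' V psi) (comp1 (F1 m2 m3 V' psi') (F1 m1 m2 V psi))
          (F1 m1 m3 (comp1 V' V) (comp1w_psi V' psi' V psi)).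
Proof.
  intros Hm1 Hm2 Hm3 HV HV'.
  destruct (compositor_spec m1 m2 m3 V psi V' psi' Hm1 Hm2 Hm3 HV HV') as [Hc Ec].
  destruct (compositor_inv_lift m1 m2 m3 V psi V' psi' Hm1 Hm2 Hm3 HV HV') as (om' & Ho' & Eo').
  pose proof (compositor_cell_mor m1 m2 m3 V psi V' psi' Hm1 Hm2 Hm3 HV HV') as Gg.
  pose proof (compositor_inv_cell_mor m1 m2 m3 V psi V' psi' Hm1 Hm2 Hm3 HV HV') as Dg.
  unpack_Jw3 m1 m2 m3 V psi V' psi' Hm1 Hm2 Hm3 HV HV' as HVV W W' W'' WX Ev Ev' Ev'' Ea Ea' Ea''.
  assert (Hg : is2 (hcomp (id2 V') (siota (spl m1 m2 V psi)))
                 (comp1 (comp1 V' (Jv' EMc m2)) (F1 m1 m2 V psi))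
                 (comp1 (comp1 V' V) (Jv' EMc m1))) by is2_solve.
  assert (Hg' : is2 (hcomp (id2 V') (spi (spl m1 m2 V psi)))
                 (comp1 (comp1 V' V) (Jv' EMc m1))
                 (comp1 (comp1 V' (Jv' EMc m2)) (F1 m1 m2 V psi))) by is2_solve.
  pose proof (weak_mor_idem m3 Hm3 _ _ _ _ _ _ _ _ _ _ _ _ WX W'' Hg Gg) as ME.
  pose proof (weak_mor_idem m3 Hm3 _ _ _ _ _ _ _ _ _ _ _ _ W'' WX Hg' Dg) as ME'.
  pose proof (idem_act m2 Hm2 _ _ _ _ _ _ W) as EB.
  destruct W as (_ & _ & _ & _ & Hip & Hpiio).
  destruct W' as (_ & _ & _ & _ & Hip' & Hpiio').
  destruct W'' as (_ & _ & _ & _ & Hip'' & Hpiio'').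
  rewrite (hat_comp1w HEM m1 m2 m3 V psi V' psi' Hm1 Hp Hp0) in ME, ME', Hip''.
  unfold hat in ME, ME', EB, Hip, Hip', Hip''.
  cnorm in ME. cnorm in ME'. cnorm in EB. cnorm in Hip. cnorm in Hip'. cnorm in Hip''.
  cnorm in Hpiio. cnorm in Hpiio'. cnorm in Hpiio''.
  split; [exact Hc|]. exists om'. split; [exact Ho'|]. split.
  - apply (Jv_faithful HEM m3 Hm3 _ (comp1 (F1 m2 m3 V' psi') (F1 m1 m2 V psi))
           (comp1 (F1 m2 m3 V' psi') (F1 m1 m2 V psi))); [is2_solve|is2_solve|].
    cnorm. rewrite Eo', Ec. unfold compositor_inv_cell, compositor_cell. cnorm.
    rw_at 2 2 Hip''. rw_at 2 5 (eq_sym ME). pose proof Hpiio as P. whisker_l V' in P. rw_at 1 2 P.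
    pose proof Hip' as P'. whisker_r (F1 m1 m2 V psi) in P'. rw_at 1 3 (eq_sym P').
    pose proof Hpiio' as P2. whisker_r (F1 m1 m2 V psi) in P2. rw_at 0 2 P2. reflexivity.
  - apply (Jv_faithful HEM m3 Hm3 _ (F1 m1 m3 (comp1 V' V) (comp1w_psi V' psi' V psi))
           (F1 m1 m3 (comp1 V' V) (comp1w_psi V' psi' V psi))); [is2_solve|is2_solve|].
    cnorm. rewrite Ec, Eo'. unfold compositor_inv_cell, compositor_cell. cnorm.
    pose proof Hip' as P'. whisker_r (F1 m1 m2 V psi) in P'. rw_at 2 2 P'.
    rw_at 2 4 (eq_sym ME'). pose proof Hip as P. whisker_l V' in P. rw_at 1 2 P.
    whisker_l V' in EB. rw_at 1 5 EB. rw_at 1 4 (eq_sym Hip''). rw_at 0 2 Hpiio''. reflexivity.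
Qed.

Lemma Jw_cell m m' V psi W phi rho :
  is_monad m -> is_monad m' -> is_EMw1 m m' V psi -> is_EMw1 m m' W phi ->
  is_EMw2 m m' V psi W phi rho ->
  is2 (F2 m m' V psi W phi rho) (F1 m m' V psi) (F1 m m' W phi) /\
  hcomp (id2 (Jv' EMc m')) (F2 m m' V psi W phi rho) =
  vcomp (spi (spl m m' W phi)) (vcomp (hat EMc m W rho) (siota (spl m m' V psi))).
Proof.
  intros Hm Hm' HV HW Hr. destruct (proj2 HJ m m' V W psi phi rho Hm Hm' HV HW Hr) as [H1 H2].
  split; [exact H1|]. rewrite H2. unfold hat.
  unpack_Jw Hspl HJ m m' V psi Hm Hm' HV as WV Ev Ea.
  unpack_Jw Hspl HJ m m' W phi Hm Hm' HW as WW Ew Ew'.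
  unpack_monad m Hm. unpack_monad m' Hm'. destruct Hr as (Hr & _ & _). f_equal.
  rewrite vcomp_assoc; [reflexivity|composable|composable].
Qed.

Lemma Jw_id2w m m' W phi : is_monad m -> is_monad m' -> is_EMw1 m m' W phi ->
  F2 m m' W phi W phi (id2w m' W phi) = id2 (F1 m m' W phi).
Proof.
  intros Hm Hm' HW. pose proof (EMw2_id2w m m' W phi Hm Hm' HW) as Hr.
  destruct (Jw_cell m m' W phi W phi _ Hm Hm' HW HW Hr) as [H1 H2].
  unpack_Jw Hspl HJ m m' W phi Hm Hm' HW as WW Ew Ea.
  destruct WW as (_ & _ & _ & _ & Hip & Hpiio). unfold hat in Hip.
  unpack_monad m Hm. unpack_monad m' Hm'.
  apply (Jv_faithful HEM m' Hm' _ (F1 m m' W phi) (F1 m m' W phi)); [is2_solve|is2_solve|].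
  rewrite H2. unfold hat, id2w. cnorm. cnorm in Hip. rw_at 1 3 (eq_sym Hip). cnorm in Hpiio.
  rw_at 0 2 Hpiio. reflexivity.
Qed.

Lemma Jw_vcomp2w m m' V W U psi phi chi rho tau :
  is_monad m -> is_monad m' -> is_EMw1 m m' V psi -> is_EMw1 m m' W phi -> is_EMw1 m m' U chi ->
  is_EMw2 m m' V psi W phi rho -> is_EMw2 m m' W phi U chi tau ->
  F2 m m' V psi U chi (vcomp2w m U tau rho) =
  vcomp (F2 m m' W phi U chi tau) (F2 m m' V psi W phi rho).
Proof.
  intros Hm Hm' HV HW HU Hr Ht.
  pose proof (EMw2_vcomp2w m m' V psi W phi U chi rho tau Hm Hm' HV HW HU Hr Ht) as Htr.
  destruct (Jw_cell _ _ _ _ _ _ _ Hm Hm' HV HU Htr) as [H1 H2].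
  destruct (Jw_cell _ _ _ _ _ _ _ Hm Hm' HV HW Hr) as [G1 G2].
  destruct (Jw_cell _ _ _ _ _ _ _ Hm Hm' HW HU Ht) as [K1 K2].
  pose proof (hat_idem HEM m m' V psi W phi rho Hm Hm' HV HW Hr) as JE.
  pose proof (hat_vcomp2w HEM m m' V W U rho tau Hm (proj1 Hr) (proj1 Ht)) as JV.
  unpack_Jw Hspl HJ m m' W phi Hm Hm' HW as WW Ew Ea.
  unpack_Jw Hspl HJ m m' V psi Hm Hm' HV as WV Ev Eva.
  unpack_Jw Hspl HJ m m' U chi Hm Hm' HU as WU Eu Eua.
  destruct WW as (_ & _ & _ & _ & Hip & Hpiio).
  pose proof (proj1 Hr) as Hr1. pose proof (proj1 Ht) as Ht1.
  unpack_monad m Hm. unpack_monad m' Hm'.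
  apply (Jv_faithful HEM m' Hm' _ (F1 m m' V psi) (F1 m m' U chi)); [is2_solve|is2_solve|].
  rewrite H2, JV. cnorm. rewrite K2, G2.
  unfold hat in JE, Hip |- *. cnorm in JE. cnorm in Hip. cnorm. rw_at_rhs 3 2 Hip. rw_at_rhs 3 5 JE.
  reflexivity.
Qed.

Lemma Jv_compositor_after_hcomp m1 m2 m3 V psi W phi rho V' psi' W' phi' rho' :
  is_monad m1 -> is_monad m2 -> is_monad m3 ->
  is_EMw1 m1 m2 V psi -> is_EMw1 m1 m2 W phi ->
  is_EMw1 m2 m3 V' psi' -> is_EMw1 m2 m3 W' phi' ->
  is_EMw2 m1 m2 V psi W phi rho -> is_EMw2 m2 m3 V' psi' W' phi' rho' ->
  hcomp (id2 (Jv' EMc m3)) (vcomp (compositor m1 m2 m3 W' phi' W phi)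
    (hcomp (F2 m2 m3 V' psi' W' phi' rho') (F2 m1 m2 V psi W phi rho))) =
  vcomp (spi (spl m1 m3 (comp1 W' W) (comp1w_psi W' phi' W phi)))
    (vcomp (hat EMc m1 (comp1 W' W) (hcomp2w m1 W' W V psi rho' rho))
       (vcomp (hcomp (id2 V') (siota (spl m1 m2 V psi)))
          (hcomp (siota (spl m2 m3 V' psi')) (id2 (F1 m1 m2 V psi))))).
Proof.
  intros Hm1 Hm2 Hm3 HV HW HV' HW' Hr Hr'.
  pose proof (EMw1_comp1 m1 m2 m3 V psi V' psi' Hm1 Hm2 Hm3 HV HV') as HVV.
  pose proof (EMw1_comp1 m1 m2 m3 W phi W' phi' Hm1 Hm2 Hm3 HW HW') as HWW.
  destruct (compositor_spec m1 m2 m3 W phi W' phi' Hm1 Hm2 Hm3 HW HW') as [Hc Ec].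
  destruct (Jw_cell _ _ _ _ _ _ _ Hm1 Hm2 HV HW Hr) as [G1 G2].
  destruct (Jw_cell _ _ _ _ _ _ _ Hm2 Hm3 HV' HW' Hr') as [K1 K2].
  pose proof (hat_hcomp2w HEM m1 m2 m3 V psi W V' W' rho rho' Hm1 Hm2 (proj1 HV) (proj1 Hr) (proj1 Hr'))
    as JH.
  pose proof (hat_weak_mor HEM m1 m2 V psi W phi rho Hm1 Hm2 HV HW Hr) as JMr.
  pose proof (hat_weak_mor HEM m2 m3 V' psi' W' phi' rho' Hm2 Hm3 HV' HW' Hr') as JMr'.
  pose proof (hat_idem HEM m2 m3 V' psi' W' phi' rho' Hm2 Hm3 HV' HW' Hr') as JEr'.
  pose proof (Jw_split_weak_alg HEM spl Hspl _ _ _ _ Hm1 Hm2 HW) as WAW.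
  pose proof (Jw_split_weak_alg HEM spl Hspl _ _ _ _ Hm2 Hm3 HV') as WAV'.
  pose proof (Jw_split_weak_alg HEM spl Hspl _ _ _ _ Hm2 Hm3 HW') as WAW'.
  assert (Hg : is2 (hat EMc m2 W' rho') (comp1 V' (Jv' EMc m2)) (comp1 W' (Jv' EMc m2))).
  { destruct Hr' as (Hr1' & _). unpack_monad m2 Hm2. unfold hat. is2_solve. }
  pose proof (weak_mor_idem m3 Hm3 _ _ _ _ _ _ _ _ _ _ _ _ WAV' WAW' Hg JMr') as ME.
  pose proof (split_pi_mor m2 Hm2 _ _ _ _ _ _ WAW) as PM.
  pose proof (idem_act m2 Hm2 _ _ _ _ _ _ WAW) as EB.
  unpack_Jw Hspl HJ m1 m2 V psi Hm1 Hm2 HV as WV Ev Ea.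
  unpack_Jw Hspl HJ m1 m2 W phi Hm1 Hm2 HW as WW Ew Eaw.
  unpack_Jw Hspl HJ m2 m3 V' psi' Hm2 Hm3 HV' as WV' Ev' Ea'.
  unpack_Jw Hspl HJ m2 m3 W' phi' Hm2 Hm3 HW' as WW' Ew' Eaw'.
  unpack_Jw Hspl HJ m1 m3 (comp1 W' W) (comp1w_psi W' phi' W phi) Hm1 Hm3 HWW as WWW Eww Eaww.
  destruct WW as (_ & _ & _ & _ & HipW & _).
  destruct WV' as (_ & _ & HpiV' & HioV' & HipV' & HpiioV').
  destruct WW' as (_ & _ & _ & _ & HipW' & _).
  pose proof (retract_hcomp _ _ _ _ _ (F2 m1 m2 V psi W phi rho) _ _ _ _ G1 HpiV' HioV' HpiioV')
    as SW.
  destruct Hr as (Hr1 & _). destruct Hr' as (Hr1' & _).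
  rewrite JH. unpack_monad m1 Hm1. unpack_monad m2 Hm2. unpack_monad m3 Hm3. is2_norm.
  unfold hat in *.
  cnorm in ME. cnorm in PM. cnorm in EB. cnorm in JMr. cnorm in JEr'. cnorm in HipW. cnorm in HipV'.
  cnorm in HipW'. cnorm in Eaw. cnorm in SW. cnorm in G2. cnorm in K2. cnorm in Ec.
  rewrite (@hcomp_split_l _ _ _ _ _ (F2 m2 m3 V' psi' W' phi' rho') (F2 m1 m2 V psi W phi rho)).
  whisker_r (F1 m1 m2 W phi) in K2. whisker_l V' in G2.
  cnorm. rewrite Ec, K2, SW. cnorm. rewrite G2. unfold compositor_cell. cnorm.
  whisker_r (F1 m1 m2 W phi) in HipW'. rw_at 2 2 HipW'.
  whisker_r (F1 m1 m2 W phi) in JEr'. rw_at 2 5 JEr'.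
  whisker_r (F1 m1 m2 W phi) in HipV'. rw_at 4 2 HipV'.
  whisker_r (F1 m1 m2 W phi) in ME. rw_at 2 5 ME.
  rw_at 2 5 JEr'. exchange 3.
  whisker_l W' in Eaw. rw_at 2 2 Eaw.
  whisker_l W' in PM. rw_at 2 5 PM.
  whisker_l W' in HipW. rw_at 1 2 HipW.
  whisker_l W' in EB. rw_at 1 5 EB.
  exchange 3. exchange 4.
  whisker_l W' in JMr. rw_at 1 4 JMr. reflexivity.
Qed.

Lemma Jv_Jw_hcomp2w_after_compositor m1 m2 m3 V psi W phi rho V' psi' W' phi' rho' :
  is_monad m1 -> is_monad m2 -> is_monad m3 ->
  is_EMw1 m1 m2 V psi -> is_EMw1 m1 m2 W phi ->
  is_EMw1 m2 m3 V' psi' -> is_EMw1 m2 m3 W' phi' ->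
  is_EMw2 m1 m2 V psi W phi rho -> is_EMw2 m2 m3 V' psi' W' phi' rho' ->
  hcomp (id2 (Jv' EMc m3)) (vcomp (F2 m1 m3 (comp1 V' V) (comp1w_psi V' psi' V psi)
                  (comp1 W' W) (comp1w_psi W' phi' W phi) (hcomp2w m1 W' W V psi rho' rho))
    (compositor m1 m2 m3 V' psi' V psi)) =
  vcomp (spi (spl m1 m3 (comp1 W' W) (comp1w_psi W' phi' W phi)))
    (vcomp (hat EMc m1 (comp1 W' W) (hcomp2w m1 W' W V psi rho' rho))
       (vcomp (hcomp (id2 V') (siota (spl m1 m2 V psi)))
          (hcomp (siota (spl m2 m3 V' psi')) (id2 (F1 m1 m2 V psi))))).
Proof.
  intros Hm1 Hm2 Hm3 HV HW HV' HW' Hr Hr'.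
  pose proof (EMw1_comp1 m1 m2 m3 V psi V' psi' Hm1 Hm2 Hm3 HV HV') as HVV.
  pose proof (EMw1_comp1 m1 m2 m3 W phi W' phi' Hm1 Hm2 Hm3 HW HW') as HWW.
  pose proof (EMw2_hcomp2w m1 m2 m3 V psi W phi rho V' psi' W' phi' rho' Hm1 Hm2 Hm3 HV HW HV' HW' Hr Hr')
    as Hs.
  destruct (compositor_spec m1 m2 m3 V psi V' psi' Hm1 Hm2 Hm3 HV HV') as [Hc Ec].
  destruct (Jw_cell _ _ _ _ _ _ _ Hm1 Hm3 HVV HWW Hs) as [S1 S2].
  pose proof (hat_hcomp2w HEM m1 m2 m3 V psi W V' W' rho rho' Hm1 Hm2 (proj1 HV) (proj1 Hr) (proj1 Hr'))
    as JH.
  pose proof (hat_weak_mor HEM m1 m3 _ _ _ _ _ Hm1 Hm3 HVV HWW Hs) as JMs.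
  pose proof (hat_idem HEM m1 m3 _ _ _ _ _ Hm1 Hm3 HVV HWW Hs) as JEs.
  pose proof (Jw_split_weak_alg HEM spl Hspl _ _ _ _ Hm1 Hm3 HVV) as WAVV.
  pose proof (Jw_split_weak_alg HEM spl Hspl _ _ _ _ Hm1 Hm3 HWW) as WAWW.
  assert (Hg : is2 (hat EMc m1 (comp1 W' W) (hcomp2w m1 W' W V psi rho' rho))
     (comp1 (comp1 V' V) (Jv' EMc m1)) (comp1 (comp1 W' W) (Jv' EMc m1))).
  { rewrite JH. destruct Hr' as (Hr1' & _). destruct Hr as (Hr1 & _). destruct HV as [Hp _].
    unpack_monad m1 Hm1. unpack_monad m2 Hm2. unfold hat. is2_solve. }
  pose proof (weak_mor_idem m3 Hm3 _ _ _ _ _ _ _ _ _ _ _ _ WAVV WAWW Hg JMs) as ME.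
  unpack_Jw Hspl HJ m1 m2 V psi Hm1 Hm2 HV as WV Ev Ea.
  unpack_Jw Hspl HJ m2 m3 V' psi' Hm2 Hm3 HV' as WV' Ev' Ea'.
  unpack_Jw Hspl HJ m1 m3 (comp1 V' V) (comp1w_psi V' psi' V psi) Hm1 Hm3 HVV as WVV Evv Eavv.
  unpack_Jw Hspl HJ m1 m3 (comp1 W' W) (comp1w_psi W' phi' W phi) Hm1 Hm3 HWW as WWW Eww Eaww.
  destruct WVV as (_ & _ & _ & _ & HipVV & _).
  destruct Hr as (Hr1 & _). destruct Hr' as (Hr1' & _).
  pose proof (proj1 HW) as Hphi. pose proof (proj1 HW') as Hphi'.
  rewrite (hat_comp1w HEM m1 m2 m3 V psi V' psi' Hm1 (proj1 HV) (proj1 HV')) in ME, HipVV.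
  rewrite (hat_comp1w HEM m1 m2 m3 W phi W' phi' Hm1 (proj1 HW) (proj1 HW')) in ME, JEs.
  rewrite JH in ME, JEs, S2 |- *.
  unpack_monad m1 Hm1. unpack_monad m2 Hm2. unpack_monad m3 Hm3. is2_norm.
  unfold hat in *.
  cnorm in ME. cnorm in JEs. cnorm in HipVV. cnorm in S2. cnorm in Ec.
  cnorm. rewrite S2, Ec. unfold compositor_cell. cnorm.
  rw_at 6 2 HipVV. rw_at 1 9 ME. rw_at 1 9 JEs. reflexivity.
Qed.

Lemma compositor_natural m1 m2 m3 V psi W phi rho V' psi' W' phi' rho' :
  is_monad m1 -> is_monad m2 -> is_monad m3 ->
  is_EMw1 m1 m2 V psi -> is_EMw1 m1 m2 W phi ->
  is_EMw1 m2 m3 V' psi' -> is_EMw1 m2 m3 W' phi' ->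
  is_EMw2 m1 m2 V psi W phi rho -> is_EMw2 m2 m3 V' psi' W' phi' rho' ->
  vcomp (compositor m1 m2 m3 W' phi' W phi)
    (hcomp (F2 m2 m3 V' psi' W' phi' rho') (F2 m1 m2 V psi W phi rho)) =
  vcomp (F2 m1 m3 (comp1 V' V) (comp1w_psi V' psi' V psi)
                  (comp1 W' W) (comp1w_psi W' phi' W phi)
                  (hcomp2w m1 W' W V psi rho' rho))
    (compositor m1 m2 m3 V' psi' V psi).
Proof.
  intros Hm1 Hm2 Hm3 HV HW HV' HW' Hr Hr'.
  pose proof (EMw1_comp1 m1 m2 m3 V psi V' psi' Hm1 Hm2 Hm3 HV HV') as HVV.
  pose proof (EMw1_comp1 m1 m2 m3 W phi W' phi' Hm1 Hm2 Hm3 HW HW') as HWW.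
  pose proof (EMw2_hcomp2w m1 m2 m3 V psi W phi rho V' psi' W' phi' rho' Hm1 Hm2 Hm3 HV HW HV' HW' Hr Hr')
    as Hs.
  pose proof (proj1 (compositor_spec m1 m2 m3 V psi V' psi' Hm1 Hm2 Hm3 HV HV')) as Hc.
  pose proof (proj1 (compositor_spec m1 m2 m3 W phi W' phi' Hm1 Hm2 Hm3 HW HW')) as Hc'.
  pose proof (proj1 (Jw_cell _ _ _ _ _ _ _ Hm1 Hm2 HV HW Hr)) as Hrho.
  pose proof (proj1 (Jw_cell _ _ _ _ _ _ _ Hm2 Hm3 HV' HW' Hr')) as Hrho'.
  pose proof (proj1 (Jw_cell _ _ _ _ _ _ _ Hm1 Hm3 HVV HWW Hs)) as Hsig.
  apply (Jv_faithful HEM m3 Hm3 _ (comp1 (F1 m2 m3 V' psi') (F1 m1 m2 V psi))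
           (F1 m1 m3 (comp1 W' W) (comp1w_psi W' phi' W phi))); [is2_solve|is2_solve|].
  rewrite (Jv_compositor_after_hcomp m1 m2 m3 V psi W phi rho V' psi' W' phi' rho'),
    (Jv_Jw_hcomp2w_after_compositor m1 m2 m3 V psi W phi rho V' psi' W' phi' rho'); auto.
Qed.

Lemma compositor_unit_r m m' V psi : is_monad m -> is_monad m' -> is_EMw1 m m' V psi ->
  vcomp (compositor m m m' V psi (id1 (mk m)) (id1w_psi m))
    (hcomp (id2 (F1 m m' V psi)) (unitor m)) = id2 (F1 m m' V psi).
Proof.
  intros Hm Hm' HV. pose proof (EMw1_id1 m Hm) as H0.
  destruct (compositor_spec m m m' _ _ V psi Hm Hm Hm' H0 HV) as [Hc Ec].
  destruct (unitor_spec m Hm) as [Hu Eu].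
  pose proof (compositor_cell_mor m m m' _ _ V psi Hm Hm Hm' H0 HV) as Gg.
  pose proof (Jw_split_weak_alg HEM spl Hspl _ _ _ _ Hm Hm' HV) as WV.
  pose proof (Jw_split_weak_alg HEM spl Hspl _ _ _ _ Hm Hm H0) as W0.
  pose proof (split_weak_alg_whisker m' Hm' _ _ _ _ _ _ WV _ (F1 m m (id1 (mk m)) (id1w_psi m)))
    as WX.
  pose proof (proj1 HV) as Hp.
  unfold compositor_cell in Ec.
  rewrite (@comp1_id1r _ _ _ _ V), (comp1w_psi_id1r m m' V psi Hp) in Hc, Ec, Gg.
  assert (Hg : is2 (hcomp (id2 V) (siota (spl m m (id1 (mk m)) (id1w_psi m))))
     (comp1 (comp1 V (Jv' EMc m)) (F1 m m (id1 (mk m)) (id1w_psi m))) (comp1 V (Jv' EMc m))).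
  { unpack_Jw Hspl HJ m m (id1 (mk m)) (id1w_psi m) Hm Hm H0 as W0' Ev0 Ea0. unpack_monad m Hm.
    unpack_monad m' Hm'. is2_solve. }
  pose proof (weak_mor_idem m' Hm' _ _ _ _ _ _ _ _ _ _ _ _ WX WV Hg Gg) as ME.
  unpack_Jw Hspl HJ m m' V psi Hm Hm' HV as WV' Ev Ea.
  unpack_Jw Hspl HJ m m (id1 (mk m)) (id1w_psi m) Hm Hm H0 as W0' Ev0 Ea0.
  destruct WV as (_ & _ & _ & _ & Hip & Hpiio).
  destruct W0 as (_ & _ & _ & _ & Hip0 & Hpiio0).
  pose proof (retract_hcomp _ _ _ _ _ (unitor m) _ _ _ _ Hu Hpi Hio Hpiio) as SWu.
  rewrite (hat_id1w HEM m Hm) in Hip0.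
  unpack_monad m Hm. unpack_monad m' Hm'. is2_norm. unfold hat in *.
  cnorm in ME. cnorm in Hip. cnorm in Hip0. cnorm in Hpiio. cnorm in SWu. cnorm in Ec. cnorm in Eu.
  cnorm in T1.
  apply (Jv_faithful HEM m' Hm' _ (F1 m m' V psi) (F1 m m' V psi)); [is2_solve|is2_solve|].
  cnorm. rewrite Ec, SWu. cnorm. whisker_l V in Eu. rewrite Eu. cnorm.
  pose proof Hip as P. whisker_r (F1 m m (id1 (mk m)) (id1w_psi m)) in P. rw_at 2 2 P.
  rw_at 1 4 ME. rw_at 0 4 (eq_sym Hip). rw_at 0 2 Hpiio. whisker_l V in Hip0. rw_at 1 2 Hip0.
  whisker_l V in T1. rw_at 1 2 T1.
  rw_at 0 2 Hpiio. reflexivity.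
Qed.

Lemma compositor_unit_l m m' V psi : is_monad m -> is_monad m' -> is_EMw1 m m' V psi ->
  vcomp (compositor m m' m' (id1 (mk m')) (id1w_psi m') V psi)
    (hcomp (unitor m') (id2 (F1 m m' V psi))) = id2 (F1 m m' V psi).
Proof.
  intros Hm Hm' HV. pose proof (EMw1_id1 m' Hm') as H0.
  destruct (compositor_spec m m' m' V psi _ _ Hm Hm' Hm' HV H0) as [Hc Ec].
  destruct (unitor_spec m' Hm') as [Hu Eu].
  pose proof (Jw_split_weak_alg HEM spl Hspl _ _ _ _ Hm Hm' HV) as WV.
  pose proof (Jw_split_weak_alg HEM spl Hspl _ _ _ _ Hm' Hm' H0) as W0.
  pose proof (proj1 HV) as Hp.
  unfold compositor_cell in Ec.
  rewrite (@comp1_id1l _ _ _ _ V), (comp1w_psi_id1l m m' V psi Hp) in Hc, Ec.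
  unpack_Jw Hspl HJ m m' V psi Hm Hm' HV as WV' Ev Ea.
  unpack_Jw Hspl HJ m' m' (id1 (mk m')) (id1w_psi m') Hm' Hm' H0 as W0' Ev0 Ea0.
  destruct WV as (_ & _ & _ & _ & Hip & Hpiio).
  destruct W0 as (_ & _ & _ & _ & Hip0 & Hpiio0).
  rewrite (hat_id1w HEM m' Hm') in Hip0.
  unpack_monad m Hm. unpack_monad m' Hm'. is2_norm. unfold hat in *.
  cnorm in Hip. cnorm in Hip0. cnorm in Hpiio. cnorm in Ec. cnorm in Eu. cnorm in T0.
  apply (Jv_faithful HEM m' Hm' _ (F1 m m' V psi) (F1 m m' V psi)); [is2_solve|is2_solve|].
  whisker_r (F1 m m' V psi) in Eu. cnorm. rewrite Ec, Eu. cnorm.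
  whisker_r (F1 m m' V psi) in Hip0. rw_at 2 2 Hip0. whisker_r (F1 m m' V psi) in T0. rw_at 2 2 T0.
  rw_at 0 2 Hpiio. reflexivity.
Qed.

Definition compositor3_cell m1 m2 m3 m4 V'' psi'' V' psi' V psi : cell (JO EMc m1) (mk m4) :=
  vcomp (spi (spl m1 m4 (comp1 V'' (comp1 V' V))
                (comp1w_psi V'' psi'' (comp1 V' V) (comp1w_psi V' psi' V psi))))
    (vcomp (hcomp (id2 (comp1 V'' V')) (siota (spl m1 m2 V psi)))
       (vcomp (hcomp (id2 V'') (hcomp (siota (spl m2 m3 V' psi')) (id2 (F1 m1 m2 V psi))))
          (hcomp (siota (spl m3 m4 V'' psi''))
             (id2 (comp1 (F1 m2 m3 V' psi') (F1 m1 m2 V psi)))))).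

Lemma Jv_compositor_assoc_l m1 m2 m3 m4 V psi V' psi' V'' psi'' :
  is_monad m1 -> is_monad m2 -> is_monad m3 -> is_monad m4 ->
  is_EMw1 m1 m2 V psi -> is_EMw1 m2 m3 V' psi' -> is_EMw1 m3 m4 V'' psi'' ->
  hcomp (id2 (Jv' EMc m4))
    (vcomp (compositor m1 m3 m4 V'' psi'' (comp1 V' V) (comp1w_psi V' psi' V psi))
       (hcomp (id2 (F1 m3 m4 V'' psi'')) (compositor m1 m2 m3 V' psi' V psi))) =
  compositor3_cell m1 m2 m3 m4 V'' psi'' V' psi' V psi.
Proof.
  intros Hm1 Hm2 Hm3 Hm4 HV HV' HV''.
  pose proof (EMw1_comp1 m1 m2 m3 V psi V' psi' Hm1 Hm2 Hm3 HV HV') as HVV.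
  pose proof (EMw1_comp1 m1 m3 m4 _ _ V'' psi'' Hm1 Hm3 Hm4 HVV HV'') as HA.
  destruct (compositor_spec m1 m2 m3 V psi V' psi' Hm1 Hm2 Hm3 HV HV') as [Hc Ec].
  destruct (compositor_spec m1 m3 m4 _ _ V'' psi'' Hm1 Hm3 Hm4 HVV HV'') as [HcA EcA].
  unfold compositor_cell in Ec, EcA.
  pose proof (compositor_cell_mor m1 m3 m4 _ _ V'' psi'' Hm1 Hm3 Hm4 HVV HV'') as Gg1.
  pose proof (compositor_cell_mor m1 m2 m3 V psi V' psi' Hm1 Hm2 Hm3 HV HV') as Gg2.
  pose proof (Jw_split_weak_alg HEM spl Hspl _ _ _ _ Hm2 Hm3 HV') as W'.
  pose proof (Jw_split_weak_alg HEM spl Hspl _ _ _ _ Hm3 Hm4 HV'') as W''.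
  pose proof (Jw_split_weak_alg HEM spl Hspl _ _ _ _ Hm1 Hm3 HVV) as WVV.
  pose proof (Jw_split_weak_alg HEM spl Hspl _ _ _ _ Hm1 Hm4 HA) as WA.
  pose proof (split_weak_alg_whisker m4 Hm4 _ _ _ _ _ _ W'' _
                (F1 m1 m3 (comp1 V' V) (comp1w_psi V' psi' V psi))) as WX1.
  pose proof (split_weak_alg_whisker m3 Hm3 _ _ _ _ _ _ W' _ (F1 m1 m2 V psi)) as WX2.
  unpack_Jw Hspl HJ m1 m2 V psi Hm1 Hm2 HV as W0 Ev Ea.
  unpack_Jw Hspl HJ m2 m3 V' psi' Hm2 Hm3 HV' as W0' Ev' Ea'.
  unpack_Jw Hspl HJ m3 m4 V'' psi'' Hm3 Hm4 HV'' as W0'' Ev'' Ea''.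
  unpack_Jw Hspl HJ m1 m3 (comp1 V' V) (comp1w_psi V' psi' V psi) Hm1 Hm3 HVV as W0VV EvVV EaVV.
  unpack_Jw Hspl HJ m1 m4 (comp1 V'' (comp1 V' V))
    (comp1w_psi V'' psi'' (comp1 V' V) (comp1w_psi V' psi' V psi)) Hm1 Hm4 HA as W0A EvA EaA.
  assert (Hg1 : is2 (hcomp (id2 V'') (siota (spl m1 m3 (comp1 V' V) (comp1w_psi V' psi' V psi))))
     (comp1 (comp1 V'' (Jv' EMc m3)) (F1 m1 m3 (comp1 V' V) (comp1w_psi V' psi' V psi)))
     (comp1 (comp1 V'' (comp1 V' V)) (Jv' EMc m1))).
  { unpack_monad m1 Hm1. unpack_monad m3 Hm3. is2_solve. }
  assert (Hg2 : is2 (hcomp (id2 V') (siota (spl m1 m2 V psi)))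
     (comp1 (comp1 V' (Jv' EMc m2)) (F1 m1 m2 V psi)) (comp1 (comp1 V' V) (Jv' EMc m1))).
  { unpack_monad m1 Hm1. unpack_monad m2 Hm2. is2_solve. }
  pose proof (weak_mor_idem m4 Hm4 _ _ _ _ _ _ _ _ _ _ _ _ WX1 WA Hg1 Gg1) as ME1.
  pose proof (weak_mor_idem m3 Hm3 _ _ _ _ _ _ _ _ _ _ _ _ WX2 WVV Hg2 Gg2) as ME2.
  destruct W' as (_ & _ & _ & _ & Hip' & Hpiio').
  destruct W'' as (_ & _ & Hpi'' & Hio'' & Hip'' & Hpiio'').
  destruct WVV as (_ & _ & _ & _ & HipVV & _).
  destruct WA as (_ & _ & _ & _ & HipA & HpiioA).
  pose proof (retract_hcomp _ _ _ _ _ (compositor m1 m2 m3 V' psi' V psi) _ _ _ _ Hc Hpi'' Hio'' Hpiio'')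
    as SW.
  rewrite (hat_comp1w HEM m1 m3 m4 _ _ V'' psi'' Hm1 (proj1 HVV) (proj1 HV'')) in ME1, HipA.
  rewrite (hat_comp1w HEM m1 m2 m3 V psi V' psi' Hm1 (proj1 HV) (proj1 HV')) in ME1, ME2, HipA, HipVV.
  unpack_monad m1 Hm1. unpack_monad m2 Hm2. unpack_monad m3 Hm3. unpack_monad m4 Hm4. is2_norm.
  unfold hat in *.
  cnorm in ME1. cnorm in ME2. cnorm in Hip'. cnorm in Hip''. cnorm in HipVV. cnorm in HipA.
  cnorm in Hpiio'. cnorm in HpiioA. cnorm in SW. cnorm in Ec. cnorm in EcA.
  unfold compositor3_cell. whisker_l V'' in Ec.
  cnorm. rewrite EcA, SW. cnorm. rewrite Ec. cnorm.
  whisker_r (F1 m1 m3 (comp1 V' V) (comp1w_psi V' psi' V psi)) in Hip''. rw_at 2 2 Hip''.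
  rw_at 1 4 ME1. rw_at 1 5 (eq_sym HipA). rw_at 0 2 HpiioA.
  whisker_l V'' in HipVV. rw_at 1 2 HipVV.
  whisker_l V'' in ME2. rw_at 1 5 (eq_sym ME2).
  whisker_r (F1 m1 m2 V psi) in Hip'. whisker_l V'' in Hip'. rw_at 2 3 (eq_sym Hip').
  whisker_r (F1 m1 m2 V psi) in Hpiio'. whisker_l V'' in Hpiio'. rw_at 3 2 Hpiio'.
  reflexivity.
Qed.

Lemma Jv_compositor_assoc_r m1 m2 m3 m4 V psi V' psi' V'' psi'' :
  is_monad m1 -> is_monad m2 -> is_monad m3 -> is_monad m4 ->
  is_EMw1 m1 m2 V psi -> is_EMw1 m2 m3 V' psi' -> is_EMw1 m3 m4 V'' psi'' ->
  hcomp (id2 (Jv' EMc m4))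
    (vcomp (compositor m1 m2 m4 (comp1 V'' V') (comp1w_psi V'' psi'' V' psi') V psi)
       (hcomp (compositor m2 m3 m4 V'' psi'' V' psi') (id2 (F1 m1 m2 V psi)))) =
  compositor3_cell m1 m2 m3 m4 V'' psi'' V' psi' V psi.
Proof.
  intros Hm1 Hm2 Hm3 Hm4 HV HV' HV''.
  pose proof (EMw1_comp1 m1 m2 m3 V psi V' psi' Hm1 Hm2 Hm3 HV HV') as HVV.
  pose proof (EMw1_comp1 m2 m3 m4 V' psi' V'' psi'' Hm2 Hm3 Hm4 HV' HV'') as HV2.
  pose proof (EMw1_comp1 m1 m3 m4 _ _ V'' psi'' Hm1 Hm3 Hm4 HVV HV'') as HA.
  destruct (compositor_spec m2 m3 m4 V' psi' V'' psi'' Hm2 Hm3 Hm4 HV' HV'') as [Hc Ec].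
  destruct (compositor_spec m1 m2 m4 V psi _ _ Hm1 Hm2 Hm4 HV HV2) as [HcB EcB].
  unfold compositor_cell in Ec, EcB.
  rewrite <- (@comp1_assoc _ _ _ _ _ _ V'' V' V),
    (comp1w_psi_assoc m1 m2 m3 m4 V psi V' psi' V'' psi'' (proj1 HV) (proj1 HV') (proj1 HV''))
    in HcB, EcB.
  pose proof (compositor_cell_mor m2 m3 m4 V' psi' V'' psi'' Hm2 Hm3 Hm4 HV' HV'') as Gg.
  pose proof (Jw_split_weak_alg HEM spl Hspl _ _ _ _ Hm3 Hm4 HV'') as W''.
  pose proof (Jw_split_weak_alg HEM spl Hspl _ _ _ _ Hm2 Hm4 HV2) as WV2.
  pose proof (split_weak_alg_whisker m4 Hm4 _ _ _ _ _ _ W'' _ (F1 m2 m3 V' psi')) as WX.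
  unpack_Jw Hspl HJ m1 m2 V psi Hm1 Hm2 HV as W0 Ev Ea.
  unpack_Jw Hspl HJ m2 m3 V' psi' Hm2 Hm3 HV' as W0' Ev' Ea'.
  unpack_Jw Hspl HJ m3 m4 V'' psi'' Hm3 Hm4 HV'' as W0'' Ev'' Ea''.
  unpack_Jw Hspl HJ m2 m4 (comp1 V'' V') (comp1w_psi V'' psi'' V' psi') Hm2 Hm4 HV2 as W0V2 EvV2 EaV2.
  unpack_Jw Hspl HJ m1 m4 (comp1 V'' (comp1 V' V))
    (comp1w_psi V'' psi'' (comp1 V' V) (comp1w_psi V' psi' V psi)) Hm1 Hm4 HA as W0A EvA EaA.
  assert (Hg : is2 (hcomp (id2 V'') (siota (spl m2 m3 V' psi')))
     (comp1 (comp1 V'' (Jv' EMc m3)) (F1 m2 m3 V' psi')) (comp1 (comp1 V'' V') (Jv' EMc m2))).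
  { unpack_monad m2 Hm2. unpack_monad m3 Hm3. is2_solve. }
  pose proof (weak_mor_idem m4 Hm4 _ _ _ _ _ _ _ _ _ _ _ _ WX WV2 Hg Gg) as ME.
  destruct W'' as (_ & _ & _ & _ & Hip'' & Hpiio'').
  destruct WV2 as (_ & _ & _ & _ & HipV2 & _).
  rewrite (hat_comp1w HEM m2 m3 m4 V' psi' V'' psi'' Hm2 (proj1 HV') (proj1 HV'')) in ME, HipV2.
  unpack_monad m1 Hm1. unpack_monad m2 Hm2. unpack_monad m3 Hm3. unpack_monad m4 Hm4. is2_norm.
  unfold hat in *.
  cnorm in ME. cnorm in Hip''. cnorm in HipV2. cnorm in Hpiio''. cnorm in Ec. cnorm in EcB.
  unfold compositor3_cell. whisker_r (F1 m1 m2 V psi) in Ec.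
  cnorm. rewrite EcB, Ec. cnorm.
  whisker_r (F1 m1 m2 V psi) in HipV2. rw_at 2 2 HipV2.
  whisker_r (F1 m1 m2 V psi) in ME. rw_at 2 5 (eq_sym ME).
  whisker_r (comp1 (F1 m2 m3 V' psi') (F1 m1 m2 V psi)) in Hip''. rw_at 3 3 (eq_sym Hip'').
  whisker_r (comp1 (F1 m2 m3 V' psi') (F1 m1 m2 V psi)) in Hpiio''. rw_at 4 2 Hpiio''.
  reflexivity.
Qed.

Lemma compositor_assoc m1 m2 m3 m4 V psi V' psi' V'' psi'' :
  is_monad m1 -> is_monad m2 -> is_monad m3 -> is_monad m4 ->
  is_EMw1 m1 m2 V psi -> is_EMw1 m2 m3 V' psi' -> is_EMw1 m3 m4 V'' psi'' ->
  vcomp (compositor m1 m3 m4 V'' psi'' (comp1 V' V) (comp1w_psi V' psi' V psi))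
    (hcomp (id2 (F1 m3 m4 V'' psi'')) (compositor m1 m2 m3 V' psi' V psi)) =
  vcomp (compositor m1 m2 m4 (comp1 V'' V') (comp1w_psi V'' psi'' V' psi') V psi)
    (hcomp (compositor m2 m3 m4 V'' psi'' V' psi') (id2 (F1 m1 m2 V psi))).
Proof.
  intros Hm1 Hm2 Hm3 Hm4 HV HV' HV''.
  pose proof (EMw1_comp1 m1 m2 m3 V psi V' psi' Hm1 Hm2 Hm3 HV HV') as HVV.
  pose proof (EMw1_comp1 m2 m3 m4 V' psi' V'' psi'' Hm2 Hm3 Hm4 HV' HV'') as HV2.
  pose proof (proj1 (compositor_spec m1 m2 m3 V psi V' psi' Hm1 Hm2 Hm3 HV HV')) as Hc1.
  pose proof (proj1 (compositor_spec m2 m3 m4 V' psi' V'' psi'' Hm2 Hm3 Hm4 HV' HV'')) as Hc2.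
  pose proof (proj1 (compositor_spec m1 m3 m4 _ _ V'' psi'' Hm1 Hm3 Hm4 HVV HV'')) as HcA.
  pose proof (proj1 (compositor_spec m1 m2 m4 V psi _ _ Hm1 Hm2 Hm4 HV HV2)) as HcB.
  rewrite <- (@comp1_assoc _ _ _ _ _ _ V'' V' V),
    (comp1w_psi_assoc m1 m2 m3 m4 V psi V' psi' V'' psi'' (proj1 HV) (proj1 HV') (proj1 HV''))
    in HcB.
  apply (Jv_faithful HEM m4 Hm4 _
     (comp1 (F1 m3 m4 V'' psi'') (comp1 (F1 m2 m3 V' psi') (F1 m1 m2 V psi)))
     (F1 m1 m4 (comp1 V'' (comp1 V' V))
        (comp1w_psi V'' psi'' (comp1 V' V) (comp1w_psi V' psi' V psi))));
    [is2_solve|is2_solve|].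
  rewrite (Jv_compositor_assoc_l m1 m2 m3 m4 V psi V' psi' V'' psi''),
    (Jv_compositor_assoc_r m1 m2 m3 m4 V psi V' psi' V'' psi''); auto.
Qed.

Theorem Jw_pseudofunctor : is_pseudofunctor EMc F1 F2 unitor compositor.
Proof.
  split; [intros; apply (proj2 HJ); auto|].
  split; [exact Jw_id2w|]. split; [exact Jw_vcomp2w|].
  split; [exact unitor_iso|]. split; [exact compositor_iso|].
  split; [intros; apply compositor_natural; auto|]. split; [exact compositor_assoc|].
  intros; split; [apply compositor_unit_r|apply compositor_unit_l]; auto.
Qed.

End JwPseudofunctor.

Section Comparison.
Context {K : TwoCat} {HK : strict_2cat K} {EMc : EMchoice K}.
Hypothesis HEM : EMchoice_ok EMc.
Variables spl spl' : split_choice EMc.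
Hypothesis Hspl : split_choice_ok EMc spl.
Hypothesis Hspl' : split_choice_ok EMc spl'.
Variables (F1 : J1type EMc) (F2 : J2type EMc) (G1 : J1type EMc) (G2 : J2type EMc).
Hypothesis HJ : is_Jw EMc spl F1 F2.
Hypothesis HJG : is_Jw EMc spl' G1 G2.

Lemma comparison_lift m m' V psi : is_monad m -> is_monad m' -> is_EMw1 m m' V psi ->
  exists om, is2 om (G1 m m' V psi) (F1 m m' V psi) /\
    hcomp (id2 (Jv' EMc m')) om = vcomp (spi (spl m m' V psi)) (siota (spl' m m' V psi)).
Proof.
  intros Hm Hm' HV.
  unpack_Jw Hspl HJ m m' V psi Hm Hm' HV as WF EvF EaF.
  unpack_Jw Hspl' HJG m m' V psi Hm Hm' HV as WG EvG EaG.
  unpack_monad m Hm. unpack_monad m' Hm'.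
  assert (Hg : is2 (id2 (comp1 V (Jv' EMc m))) (comp1 V (Jv' EMc m)) (comp1 V (Jv' EMc m)))
    by is2_solve.
  assert (Hgm : vcomp (hat EMc m V psi) (hcomp (id2 (mt m')) (id2 (comp1 V (Jv' EMc m)))) =
                vcomp (id2 (comp1 V (Jv' EMc m))) (hat EMc m V psi)).
  { unfold hat. cnorm. reflexivity. }
  pose proof (split_mor m' Hm' _ _ _ _ _ _ _ _ _ _ _ _ WG WF Hg Hgm) as M.
  pose proof (Jv_lift HEM m' Hm' _ (G1 m m' V psi) (F1 m m' V psi) _ _ _ _ _ M) as Ex.
  is2_norm. destruct Ex as (om & Ho & Eo).
  - hom_eq.
  - hom_eq.
  - cnorm in EaG. unfold hat. cnorm. rewrite EaG. reflexivity.
  - cnorm in EaF. unfold hat. cnorm. rewrite EaF. reflexivity.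
  - exists om. split; [exact Ho|]. rewrite Eo. cnorm. reflexivity.
Qed.

Definition comparison : forall m m' : monad K, hom (mk m) (mk m') -> cell (mk m) (mk m') ->
    cell (JO EMc m) (JO EMc m') := fun m m' V psi =>
  lift_cell m' (G1 m m' V psi) (F1 m m' V psi)
    (vcomp (spi (spl m m' V psi)) (siota (spl' m m' V psi))).

Lemma comparison_spec m m' V psi : is_monad m -> is_monad m' -> is_EMw1 m m' V psi ->
  is2 (comparison m m' V psi) (G1 m m' V psi) (F1 m m' V psi) /\
  hcomp (id2 (Jv' EMc m')) (comparison m m' V psi) =
    vcomp (spi (spl m m' V psi)) (siota (spl' m m' V psi)).
Proof.
  intros Hm Hm' HV. exact (lift_cell_spec _ _ _ _ _ (comparison_lift m m' V psi Hm Hm' HV)).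
Qed.

Lemma comparison_natural m m' V psi W phi rho : is_monad m -> is_monad m' -> is_EMw1 m m' V psi ->
  is_EMw1 m m' W phi -> is_EMw2 m m' V psi W phi rho ->
  vcomp (comparison m m' W phi) (G2 m m' V psi W phi rho) =
    vcomp (F2 m m' V psi W phi rho) (comparison m m' V psi).
Proof.
  intros Hm Hm' HV HW Hr.
  destruct (comparison_spec m m' V psi Hm Hm' HV) as [HsV EsV].
  destruct (comparison_spec m m' W phi Hm Hm' HW) as [HsW EsW].
  destruct (Jw_cell HEM spl Hspl F1 F2 HJ _ _ _ _ _ _ _ Hm Hm' HV HW Hr) as [HF EF].
  destruct (Jw_cell HEM spl' Hspl' G1 G2 HJG _ _ _ _ _ _ _ Hm Hm' HV HW Hr) as [HG EG].
  pose proof (hat_idem HEM m m' V psi W phi rho Hm Hm' HV HW Hr) as JE.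
  pose proof (hat_weak_mor HEM m m' V psi W phi rho Hm Hm' HV HW Hr) as JM.
  unpack_Jw Hspl HJ m m' V psi Hm Hm' HV as WFV EvFV EaFV.
  unpack_Jw Hspl HJ m m' W phi Hm Hm' HW as WFW EvFW EaFW.
  unpack_Jw Hspl' HJG m m' V psi Hm Hm' HV as WGV EvGV EaGV.
  unpack_Jw Hspl' HJG m m' W phi Hm Hm' HW as WGW EvGW EaGW.
  assert (Hg : is2 (hat EMc m W rho) (comp1 V (Jv' EMc m)) (comp1 W (Jv' EMc m))).
  { destruct Hr as (Hr1 & _). unpack_monad m Hm. unfold hat. is2_solve. }
  pose proof (weak_mor_idem m' Hm' _ _ _ _ _ _ _ _ _ _ _ _ WFV WFW Hg JM) as ME.
  destruct WFV as (_ & _ & _ & _ & HipFV & _).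
  destruct WGW as (_ & _ & _ & _ & HipGW & _).
  destruct Hr as (Hr1 & _).
  unpack_monad m Hm. unpack_monad m' Hm'. is2_norm. unfold hat in *.
  cnorm in JE. cnorm in ME. cnorm in HipFV. cnorm in HipGW. cnorm in EF. cnorm in EG.
  apply (Jv_faithful HEM m' Hm' _ (G1 m m' V psi) (F1 m m' W phi)); [is2_solve|is2_solve|].
  cnorm. rewrite EsW, EG, EF, EsV. cnorm.
  rw_at 1 2 HipGW. rw_at 1 5 JE. symmetry. rw_at 3 2 HipFV. rw_at 1 5 ME. rw_at 1 5 JE. reflexivity.
Qed.

End Comparison.

Section Transport.
Context {K : TwoCat} {HK : strict_2cat K} {EMc : EMchoice K}.
Variables (F1 : J1type EMc) (F2 : J2type EMc) (uF : Utype EMc) (cF : Ctype EMc).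
Variables (G1 : J1type EMc) (G2 : J2type EMc).
Variables (S Si : forall m m' : monad K, hom (mk m) (mk m') -> cell (mk m) (mk m') ->
            cell (JO EMc m) (JO EMc m')).
Hypothesis HPF : is_pseudofunctor EMc F1 F2 uF cF.
Hypothesis HG_cell :
  forall (m m' : monad K) (V W : hom (mk m) (mk m')) (psi phi rho : cell (mk m) (mk m')),
      is_monad m -> is_monad m' -> is_EMw1 m m' V psi -> is_EMw1 m m' W phi ->
      is_EMw2 m m' V psi W phi rho ->
      is2 (G2 m m' V psi W phi rho) (G1 m m' V psi) (G1 m m' W phi).
Hypothesis HG_id2w : forall (m m' : monad K) (W : hom (mk m) (mk m')) (phi : cell (mk m) (mk m')),
  is_monad m -> is_monad m' -> is_EMw1 m m' W phi ->
  G2 m m' W phi W phi (id2w m' W phi) = id2 (G1 m m' W phi).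
Hypothesis HG_vcomp2w : forall (m m' : monad K) (V W U : hom (mk m) (mk m'))
    (psi phi chi rho tau : cell (mk m) (mk m')),
  is_monad m -> is_monad m' ->
  is_EMw1 m m' V psi -> is_EMw1 m m' W phi -> is_EMw1 m m' U chi ->
  is_EMw2 m m' V psi W phi rho -> is_EMw2 m m' W phi U chi tau ->
  G2 m m' V psi U chi (vcomp2w m U tau rho) =
    vcomp (G2 m m' W phi U chi tau) (G2 m m' V psi W phi rho).
Hypothesis HS_iso : forall m m' V psi, is_monad m -> is_monad m' -> is_EMw1 m m' V psi ->
  is2 (S m m' V psi) (G1 m m' V psi) (F1 m m' V psi) /\
  is2 (Si m m' V psi) (F1 m m' V psi) (G1 m m' V psi) /\
  vcomp (Si m m' V psi) (S m m' V psi) = id2 (G1 m m' V psi) /\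
  vcomp (S m m' V psi) (Si m m' V psi) = id2 (F1 m m' V psi).
Hypothesis HS_natural : forall m m' V psi W phi rho, is_monad m -> is_monad m' -> is_EMw1 m m' V psi ->
  is_EMw1 m m' W phi -> is_EMw2 m m' V psi W phi rho ->
  vcomp (S m m' W phi) (G2 m m' V psi W phi rho) = vcomp (F2 m m' V psi W phi rho) (S m m' V psi).

Definition unitorT : Utype EMc := fun m => vcomp (Si m m (id1 (mk m)) (id1w_psi m)) (uF m).
Definition compositorT : Ctype EMc := fun m1 m2 m3 V' psi' V psi =>
  vcomp (Si m1 m3 (comp1 V' V) (comp1w_psi V' psi' V psi))
    (vcomp (cF m1 m2 m3 V' psi' V psi) (hcomp (S m2 m3 V' psi') (S m1 m2 V psi))).

Lemma comparison_inv_natural m m' V psi W phi rho :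
  is_monad m -> is_monad m' -> is_EMw1 m m' V psi ->
  is_EMw1 m m' W phi -> is_EMw2 m m' V psi W phi rho ->
  vcomp (Si m m' W phi) (F2 m m' V psi W phi rho) = vcomp (G2 m m' V psi W phi rho) (Si m m' V psi).
Proof.
  intros Hm Hm' HV HW Hr.
  destruct (HS_iso m m' V psi Hm Hm' HV) as (S1 & S2 & S3 & S4).
  destruct (HS_iso m m' W phi Hm Hm' HW) as (T1 & T2 & T3 & T4).
  pose proof (HS_natural m m' V psi W phi rho Hm Hm' HV HW Hr) as N.
  pose proof (HG_cell m m' V W psi phi rho Hm Hm' HV HW Hr) as HG.
  destruct HPF as (HF1 & _).
  pose proof (HF1 m m' V W psi phi rho Hm Hm' HV HW Hr) as HF.
  transitivity (vcomp (Si m m' W phi) (vcomp (F2 m m' V psi W phi rho)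
                  (vcomp (S m m' V psi) (Si m m' V psi)))).
  { rewrite S4. cnorm. reflexivity. }
  cnorm. rw_at 1 2 (eq_sym N). rw_at 0 2 T3. reflexivity.
Qed.

Lemma comparison_iso m m' V psi : is_monad m -> is_monad m' -> is_EMw1 m m' V psi ->
  is_iso2 (S m m' V psi) (G1 m m' V psi) (F1 m m' V psi) /\
  is_iso2 (Si m m' V psi) (F1 m m' V psi) (G1 m m' V psi).
Proof.
  intros Hm Hm' HV. destruct (HS_iso m m' V psi Hm Hm' HV) as (S1 & S2 & S3 & S4).
  split; split; auto; [exists (Si m m' V psi)|exists (S m m' V psi)]; auto.
Qed.

Lemma unitorT_iso m : is_monad m ->
  is_iso2 (unitorT m) (id1 (JO EMc m)) (G1 m m (id1 (mk m)) (id1w_psi m)).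
Proof.
  intros Hm. pose proof (EMw1_id1 m Hm) as H0. destruct HPF as (_ & _ & _ & HU & _).
  apply (is_iso2_vcomp _ _ _ _ _ _ _ (HU m Hm)). apply (comparison_iso m m _ _ Hm Hm H0).
Qed.

Lemma compositorT_iso m1 m2 m3 V psi V' psi' :
  is_monad m1 -> is_monad m2 -> is_monad m3 -> is_EMw1 m1 m2 V psi -> is_EMw1 m2 m3 V' psi' ->
  is_iso2 (compositorT m1 m2 m3 V' psi' V psi) (comp1 (G1 m2 m3 V' psi') (G1 m1 m2 V psi))
          (G1 m1 m3 (comp1 V' V) (comp1w_psi V' psi' V psi)).
Proof.
  intros Hm1 Hm2 Hm3 HV HV'.
  pose proof (EMw1_comp1 m1 m2 m3 V psi V' psi' Hm1 Hm2 Hm3 HV HV') as HVV.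
  destruct HPF as (_ & _ & _ & _ & HC & _).
  unfold compositorT. eapply is_iso2_vcomp; [eapply is_iso2_vcomp|].
  - apply is_iso2_hcomp; apply comparison_iso; auto.
  - apply HC; auto.
  - apply comparison_iso; auto.
Qed.

Lemma compositorT_natural m1 m2 m3 V psi W phi rho V' psi' W' phi' rho' :
  is_monad m1 -> is_monad m2 -> is_monad m3 ->
  is_EMw1 m1 m2 V psi -> is_EMw1 m1 m2 W phi ->
  is_EMw1 m2 m3 V' psi' -> is_EMw1 m2 m3 W' phi' ->
  is_EMw2 m1 m2 V psi W phi rho -> is_EMw2 m2 m3 V' psi' W' phi' rho' ->
  vcomp (compositorT m1 m2 m3 W' phi' W phi)
    (hcomp (G2 m2 m3 V' psi' W' phi' rho') (G2 m1 m2 V psi W phi rho)) =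
  vcomp (G2 m1 m3 (comp1 V' V) (comp1w_psi V' psi' V psi)
                  (comp1 W' W) (comp1w_psi W' phi' W phi)
                  (hcomp2w m1 W' W V psi rho' rho))
    (compositorT m1 m2 m3 V' psi' V psi).
Proof.
  intros Hm1 Hm2 Hm3 HV HW HV' HW' Hr Hr'.
  pose proof (EMw1_comp1 m1 m2 m3 V psi V' psi' Hm1 Hm2 Hm3 HV HV') as HVV.
  pose proof (EMw1_comp1 m1 m2 m3 W phi W' phi' Hm1 Hm2 Hm3 HW HW') as HWW.
  pose proof (EMw2_hcomp2w m1 m2 m3 V psi W phi rho V' psi' W' phi' rho' Hm1 Hm2 Hm3 HV HW HV' HW' Hr Hr')
    as Hs.
  destruct (HS_iso _ _ _ _ Hm1 Hm2 HV) as (SV1 & SV2 & _ & _).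
  destruct (HS_iso _ _ _ _ Hm1 Hm2 HW) as (SW1 & SW2 & _ & _).
  destruct (HS_iso _ _ _ _ Hm2 Hm3 HV') as (SV1' & SV2' & _ & _).
  destruct (HS_iso _ _ _ _ Hm2 Hm3 HW') as (SW1' & SW2' & _ & _).
  destruct (HS_iso _ _ _ _ Hm1 Hm3 HVV) as (SVV1 & SVV2 & _ & _).
  destruct (HS_iso _ _ _ _ Hm1 Hm3 HWW) as (SWW1 & SWW2 & _ & _).
  pose proof HPF as (HF1 & _ & _ & _ & HC & HN & _).
  pose proof (HF1 _ _ _ _ _ _ _ Hm1 Hm2 HV HW Hr) as F2r.
  pose proof (HF1 _ _ _ _ _ _ _ Hm2 Hm3 HV' HW' Hr') as F2r'.
  pose proof (HF1 _ _ _ _ _ _ _ Hm1 Hm3 HVV HWW Hs) as F2s.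
  pose proof (HG_cell _ _ _ _ _ _ _ Hm1 Hm2 HV HW Hr) as G2r.
  pose proof (HG_cell _ _ _ _ _ _ _ Hm2 Hm3 HV' HW' Hr') as G2r'.
  pose proof (HG_cell _ _ _ _ _ _ _ Hm1 Hm3 HVV HWW Hs) as G2s.
  pose proof (proj1 (HC _ _ _ _ _ _ _ Hm1 Hm2 Hm3 HV HV')) as CV.
  pose proof (proj1 (HC _ _ _ _ _ _ _ Hm1 Hm2 Hm3 HW HW')) as CW.
  pose proof (HN _ _ _ _ _ _ _ _ _ _ _ _ _ Hm1 Hm2 Hm3 HV HW HV' HW' Hr Hr') as N.
  pose proof (HS_natural _ _ _ _ _ _ _ Hm1 Hm2 HV HW Hr) as Nr.
  pose proof (HS_natural _ _ _ _ _ _ _ Hm2 Hm3 HV' HW' Hr') as Nr'.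
  pose proof (comparison_inv_natural _ _ _ _ _ _ _ Hm1 Hm3 HVV HWW Hs) as Ns.
  unfold compositorT. cnorm. focus 2 2. rewrite vcomp_hcomp by composable. rewrite Nr, Nr'.
  rewrite <- vcomp_hcomp by composable. cnorm0.
  rw_at 1 2 N. rw_at 0 2 Ns. reflexivity.
Qed.

Lemma compositorT_assoc m1 m2 m3 m4 V psi V' psi' V'' psi'' :
  is_monad m1 -> is_monad m2 -> is_monad m3 -> is_monad m4 ->
  is_EMw1 m1 m2 V psi -> is_EMw1 m2 m3 V' psi' -> is_EMw1 m3 m4 V'' psi'' ->
  vcomp (compositorT m1 m3 m4 V'' psi'' (comp1 V' V) (comp1w_psi V' psi' V psi))
    (hcomp (id2 (G1 m3 m4 V'' psi'')) (compositorT m1 m2 m3 V' psi' V psi)) =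
  vcomp (compositorT m1 m2 m4 (comp1 V'' V') (comp1w_psi V'' psi'' V' psi') V psi)
    (hcomp (compositorT m2 m3 m4 V'' psi'' V' psi') (id2 (G1 m1 m2 V psi))).
Proof.
  intros Hm1 Hm2 Hm3 Hm4 HV HV' HV''.
  pose proof (EMw1_comp1 m1 m2 m3 V psi V' psi' Hm1 Hm2 Hm3 HV HV') as HVV.
  pose proof (EMw1_comp1 m2 m3 m4 V' psi' V'' psi'' Hm2 Hm3 Hm4 HV' HV'') as HV2.
  pose proof (EMw1_comp1 m1 m3 m4 _ _ V'' psi'' Hm1 Hm3 Hm4 HVV HV'') as HA.
  pose proof (EMw1_comp1 m1 m2 m4 V psi _ _ Hm1 Hm2 Hm4 HV HV2) as HB.
  pose proof (proj1 HV) as Hp. pose proof (proj1 HV') as Hp'. pose proof (proj1 HV'') as Hp''.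
  destruct (HS_iso _ _ _ _ Hm1 Hm2 HV) as (S1 & S2 & _ & _).
  destruct (HS_iso _ _ _ _ Hm2 Hm3 HV') as (S1' & S2' & _ & _).
  destruct (HS_iso _ _ _ _ Hm3 Hm4 HV'') as (S1'' & S2'' & _ & _).
  destruct (HS_iso _ _ _ _ Hm1 Hm3 HVV) as (SVV1 & SVV2 & _ & EVV).
  destruct (HS_iso _ _ _ _ Hm2 Hm4 HV2) as (SV21 & SV22 & _ & EV2).
  destruct (HS_iso _ _ _ _ Hm1 Hm4 HA) as (SA1 & SA2 & _ & _).
  pose proof HPF as (_ & _ & _ & _ & HC & _ & HAs & _).
  pose proof (proj1 (HC _ _ _ _ _ _ _ Hm1 Hm2 Hm3 HV HV')) as C1.
  pose proof (proj1 (HC _ _ _ _ _ _ _ Hm2 Hm3 Hm4 HV' HV'')) as C2.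
  pose proof (proj1 (HC _ _ _ _ _ _ _ Hm1 Hm3 Hm4 HVV HV'')) as CA.
  pose proof (proj1 (HC _ _ _ _ _ _ _ Hm1 Hm2 Hm4 HV HV2)) as CB.
  pose proof (HAs _ _ _ _ _ _ _ _ _ _ Hm1 Hm2 Hm3 Hm4 HV HV' HV'') as AS.
  rewrite <- (@comp1_assoc _ _ _ _ _ _ V'' V' V),
    (comp1w_psi_assoc m1 m2 m3 m4 V psi V' psi' V'' psi'' Hp Hp' Hp'') in CB.
  unfold compositorT.
  rewrite <- (@comp1_assoc _ _ _ _ _ _ V'' V' V),
    (comp1w_psi_assoc m1 m2 m3 m4 V psi V' psi' V'' psi'' Hp Hp' Hp'').
  rewrite (@hcomp_split_l _ _ _ _ _ (S m3 m4 V'' psi'')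
             (S m1 m3 (comp1 V' V) (comp1w_psi V' psi' V psi))).
  rewrite (@hcomp_split_l _ _ _ _ _ (S m2 m3 V' psi') (S m1 m2 V psi)).
  rewrite (@hcomp_split_r _ _ _ _ _ (S m2 m4 (comp1 V'' V') (comp1w_psi V'' psi'' V' psi'))
             (S m1 m2 V psi)).
  rewrite (@hcomp_split_l _ _ _ _ _ (S m3 m4 V'' psi'') (S m2 m3 V' psi')).
  cnorm. whisker_l (G1 m3 m4 V'' psi'') in EVV. rw_at 3 2 EVV. exchange 2. exchange 3. exchange 4.
  symmetry. whisker_r (G1 m1 m2 V psi) in EV2. rw_at 3 2 EV2. exchange' 2. exchange 4. exchange' 3.
  cnorm in AS. rw_at 1 2 (eq_sym AS). reflexivity.
Qed.

Lemma compositorT_unit_r m m' V psi : is_monad m -> is_monad m' -> is_EMw1 m m' V psi ->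
  vcomp (compositorT m m m' V psi (id1 (mk m)) (id1w_psi m))
    (hcomp (id2 (G1 m m' V psi)) (unitorT m)) = id2 (G1 m m' V psi).
Proof.
  intros Hm Hm' HV. pose proof (EMw1_id1 m Hm) as H0. pose proof (proj1 HV) as Hp.
  destruct (HS_iso _ _ _ _ Hm Hm' HV) as (S1 & S2 & SiS & _).
  destruct (HS_iso _ _ _ _ Hm Hm H0) as (S01 & S02 & _ & E0).
  pose proof HPF as (_ & _ & _ & HU & HC & _ & _ & HUC).
  pose proof (proj1 (HU m Hm)) as U0.
  pose proof (proj1 (HC _ _ _ _ _ _ _ Hm Hm Hm' H0 HV)) as C1.
  pose proof (proj1 (HUC _ _ _ _ Hm Hm' HV)) as UC.
  rewrite (@comp1_id1r _ _ _ _ V), (comp1w_psi_id1r m m' V psi Hp) in C1.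
  unfold compositorT, unitorT. rewrite (@comp1_id1r _ _ _ _ V), (comp1w_psi_id1r m m' V psi Hp).
  rewrite (@hcomp_split_l _ _ _ _ _ (S m m' V psi) (S m m (id1 (mk m)) (id1w_psi m))).
  cnorm. whisker_l (G1 m m' V psi) in E0. rw_at 3 2 E0. exchange 2. cnorm in UC. rw_at 1 2 UC.
  rw_at 0 2 SiS. reflexivity.
Qed.

Lemma compositorT_unit_l m m' V psi : is_monad m -> is_monad m' -> is_EMw1 m m' V psi ->
  vcomp (compositorT m m' m' (id1 (mk m')) (id1w_psi m') V psi)
    (hcomp (unitorT m') (id2 (G1 m m' V psi))) = id2 (G1 m m' V psi).
Proof.
  intros Hm Hm' HV. pose proof (EMw1_id1 m' Hm') as H0. pose proof (proj1 HV) as Hp.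
  destruct (HS_iso _ _ _ _ Hm Hm' HV) as (S1 & S2 & SiS & _).
  destruct (HS_iso _ _ _ _ Hm' Hm' H0) as (S01 & S02 & _ & E0).
  pose proof HPF as (_ & _ & _ & HU & HC & _ & _ & HUC).
  pose proof (proj1 (HU m' Hm')) as U0.
  pose proof (proj1 (HC _ _ _ _ _ _ _ Hm Hm' Hm' HV H0)) as C1.
  pose proof (proj2 (HUC _ _ _ _ Hm Hm' HV)) as UC.
  rewrite (@comp1_id1l _ _ _ _ V), (comp1w_psi_id1l m m' V psi Hp) in C1.
  unfold compositorT, unitorT. rewrite (@comp1_id1l _ _ _ _ V), (comp1w_psi_id1l m m' V psi Hp).
  rewrite (@hcomp_split_r _ _ _ _ _ (S m' m' (id1 (mk m')) (id1w_psi m')) (S m m' V psi)).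
  cnorm. whisker_r (G1 m m' V psi) in E0. rw_at 3 2 E0. exchange' 2. cnorm in UC. rw_at 1 2 UC.
  rw_at 0 2 SiS. reflexivity.
Qed.

Lemma pseudofunctor_transport :
  is_pseudofunctor EMc G1 G2 unitorT compositorT /\
  is_psnat_iso EMc F1 F2 uF cF G1 G2 unitorT compositorT (fun m => id1 (JO EMc m)) S.
Proof.
  split.
  - split; [exact HG_cell|]. split; [exact HG_id2w|]. split; [exact HG_vcomp2w|].
    split; [exact unitorT_iso|]. split; [exact compositorT_iso|].
    split; [intros; apply compositorT_natural; auto|].
    split; [exact compositorT_assoc|].
    intros; split; [apply compositorT_unit_r|apply compositorT_unit_l]; auto.
  - split; [|split; [|split; [|split]]].
    + intros m _. exists (id1 (JO EMc m)). split; apply comp1_id1l.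
    + intros m m' V psi Hm Hm' HV. rewrite comp1_id1r, comp1_id1l. apply comparison_iso; auto.
    + intros. rewrite hcomp_id1r, hcomp_id1l. apply HS_natural; auto.
    + intros m Hm. pose proof (EMw1_id1 m Hm) as H0.
      destruct (HS_iso _ _ _ _ Hm Hm H0) as (S1 & S2 & _ & E).
      pose proof HPF as (_ & _ & _ & HU & _).
      pose proof (proj1 (HU m Hm)) as U0.
      rewrite hcomp_id1r, hcomp_id1l. unfold unitorT. cnorm. rw_at 0 2 E. reflexivity.
    + intros m1 m2 m3 V psi V' psi' Hm1 Hm2 Hm3 HV HV'.
      pose proof (EMw1_comp1 m1 m2 m3 V psi V' psi' Hm1 Hm2 Hm3 HV HV') as HVV.
      destruct (HS_iso _ _ _ _ Hm1 Hm2 HV) as (S1 & S2 & _ & _).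
      destruct (HS_iso _ _ _ _ Hm2 Hm3 HV') as (S1' & S2' & _ & _).
      destruct (HS_iso _ _ _ _ Hm1 Hm3 HVV) as (SVV1 & SVV2 & _ & E).
      pose proof HPF as (_ & _ & _ & _ & HC & _).
      pose proof (proj1 (HC _ _ _ _ _ _ _ Hm1 Hm2 Hm3 HV HV')) as C1.
      rewrite hcomp_id1r, hcomp_id1l. unfold compositorT.
      rewrite (@hcomp_split_l _ _ _ _ _ (S m2 m3 V' psi') (S m1 m2 V psi)).
      cnorm. rw_at 0 2 E. reflexivity.
Qed.

End Transport.

Section ComparisonInverse.
Context {K : TwoCat} {HK : strict_2cat K} {EMc : EMchoice K}.
Hypothesis HEM : EMchoice_ok EMc.
Variables spl spl' : split_choice EMc.
Hypothesis Hspl : split_choice_ok EMc spl.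
Hypothesis Hspl' : split_choice_ok EMc spl'.
Variables (F1 : J1type EMc) (F2 : J2type EMc) (G1 : J1type EMc) (G2 : J2type EMc).
Hypothesis HJ : is_Jw EMc spl F1 F2.
Hypothesis HJG : is_Jw EMc spl' G1 G2.

Lemma comparison_inv m m' V psi : is_monad m -> is_monad m' -> is_EMw1 m m' V psi ->
  vcomp (comparison spl' spl G1 F1 m m' V psi) (comparison spl spl' F1 G1 m m' V psi) =
    id2 (G1 m m' V psi).
Proof.
  intros Hm Hm' HV.
  destruct (comparison_spec HEM spl spl' Hspl Hspl' F1 F2 G1 G2 HJ HJG m m' V psi Hm Hm' HV) as [H1 E1].
  destruct (comparison_spec HEM spl' spl Hspl' Hspl G1 G2 F1 F2 HJG HJ m m' V psi Hm Hm' HV) as [H2 E2].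
  unpack_Jw Hspl HJ m m' V psi Hm Hm' HV as WF EvF EaF.
  unpack_Jw Hspl' HJG m m' V psi Hm Hm' HV as WG EvG EaG.
  destruct WF as (_ & _ & _ & _ & HipF & _).
  destruct WG as (_ & _ & _ & _ & HipG & HpiioG).
  unpack_monad m Hm. unpack_monad m' Hm'. is2_norm. unfold hat in *. cnorm in HipF. cnorm in HipG.
  cnorm in HpiioG.
  apply (Jv_faithful HEM m' Hm' _ (G1 m m' V psi) (G1 m m' V psi)); [is2_solve|is2_solve|].
  cnorm. rewrite E2, E1. cnorm. rw_at 1 2 HipF. rw_at 1 3 (eq_sym HipG). rw_at 0 2 HpiioG.
  reflexivity.
Qed.

End ComparisonInverse.

Section SplittingIndependence.
Context {K : TwoCat} {HK : strict_2cat K} {EMc : EMchoice K}.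
Hypothesis HEM : EMchoice_ok EMc.
Variables spl spl' : split_choice EMc.
Hypothesis Hspl : split_choice_ok EMc spl.
Hypothesis Hspl' : split_choice_ok EMc spl'.
Variables (F1 : J1type EMc) (F2 : J2type EMc) (G1 : J1type EMc) (G2 : J2type EMc).
Hypothesis HJ : is_Jw EMc spl F1 F2.
Hypothesis HJG : is_Jw EMc spl' G1 G2.

Lemma Jw_splitting_independent (uF : Utype EMc) (cF : Ctype EMc) :
  is_pseudofunctor EMc F1 F2 uF cF ->
  is_pseudofunctor EMc G1 G2 (unitorT uF (comparison spl' spl G1 F1))
    (compositorT cF (comparison spl spl' F1 G1) (comparison spl' spl G1 F1)) /\
  is_psnat_iso EMc F1 F2 uF cF G1 G2 (unitorT uF (comparison spl' spl G1 F1))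
    (compositorT cF (comparison spl spl' F1 G1) (comparison spl' spl G1 F1))
    (fun m => id1 (JO EMc m)) (comparison spl spl' F1 G1).
Proof.
  intros HPF. apply (pseudofunctor_transport F1 F2 uF cF G1 G2 _ _ HPF).
  - intros; apply (proj2 HJG); auto.
  - exact (Jw_id2w HEM spl' Hspl' G1 G2 HJG).
  - exact (Jw_vcomp2w HEM spl' Hspl' G1 G2 HJG).
  - intros m m' V psi Hm Hm' HV.
    destruct (comparison_spec HEM spl spl' Hspl Hspl' F1 F2 G1 G2 HJ HJG m m' V psi Hm Hm' HV) as [H1 _].
    destruct (comparison_spec HEM spl' spl Hspl' Hspl G1 G2 F1 F2 HJG HJ m m' V psi Hm Hm' HV) as [H2 _].
    split; [exact H1|]. split; [exact H2|].
    split.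
    + exact (comparison_inv HEM spl spl' Hspl Hspl' F1 F2 G1 G2 HJ HJG m m' V psi Hm Hm' HV).
    + exact (comparison_inv HEM spl' spl Hspl' Hspl G1 G2 F1 F2 HJG HJ m m' V psi Hm Hm' HV).
  - intros; apply comparison_natural; auto.
Qed.
End SplittingIndependence.

Theorem theorem3p5 :
  forall (K : TwoCat) (EMc : EMchoice K),
    strict_2cat K ->
    EMchoice_ok EMc ->
    idempotents_split K ->
    (forall (spl : split_choice EMc) (F1 : J1type EMc) (F2 : J2type EMc),
        split_choice_ok EMc spl -> is_Jw EMc spl F1 F2 ->
        exists (u : Utype EMc) (c : Ctype EMc), is_pseudofunctor EMc F1 F2 u c) /\
    (forall (spl spl' : split_choice EMc)
            (F1 : J1type EMc) (F2 : J2type EMc) (G1 : J1type EMc) (G2 : J2type EMc)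
            (uF : Utype EMc) (cF : Ctype EMc),
        split_choice_ok EMc spl -> split_choice_ok EMc spl' ->
        is_Jw EMc spl F1 F2 -> is_Jw EMc spl' G1 G2 ->
        is_pseudofunctor EMc F1 F2 uF cF ->
        exists (uG : Utype EMc) (cG : Ctype EMc)
               (s0 : forall m : monad K, hom (JO EMc m) (JO EMc m))
               (s1 : forall m m' : monad K, hom (mk m) (mk m') -> cell (mk m) (mk m') ->
                       cell (JO EMc m) (JO EMc m')),
          is_pseudofunctor EMc G1 G2 uG cG /\
          is_psnat_iso EMc F1 F2 uF cF G1 G2 uG cG s0 s1).
Proof.
  intros K EMc HK HEM _. split.
  - intros spl F1 F2 Hspl HJ.
    exists (unitor spl F1), (compositor spl F1). exact (Jw_pseudofunctor HEM spl Hspl F1 F2 HJ).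
  - intros spl spl' F1 F2 G1 G2 uF cF Hspl Hspl' HJ HJG HPF.
    eexists _, _, _, _.
    exact (Jw_splitting_independent HEM spl spl' Hspl Hspl' F1 F2 G1 G2 HJ HJG uF cF HPF).
Qed.
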